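(* Let $N$ be a non-negative integer, $\beta=N+1$, $\lambda_1=(h_1+h_2-l_1-l_2-\alpha_1-\alpha_2-\beta+2)/2$, and assume $-\lambda_1-\alpha_1\notin\{0,1,\dots,N-1\}$ and $\lambda_1+\alpha_2>1$ (real). Let $c_k(E)$, $c(E)$ be as in the context and $c(E_0)=0$. Assume the parameters and $x$ are generic so that all expressions below are defined. Define $$g_6(x)=(1-q)x^{-\alpha_1}\frac{(q,\ q^{l_1-l_2+1}t_1/t_2,\ q^{\lambda_1+l_1+\alpha_1+1/2}t_1/x;q)_\infty}{(q^{\lambda_1-h_1+l_1+\alpha_1},\ q^{\lambda_1-h_2+l_1+\alpha_1}t_1/t_2,\ q^{l_1+1/2}t_1/x;q)_\infty}\sum_{k=0}^{N}(q^{l_1+1/2}t_1)^{k+1}c_k(E_0)\,{}_3\phi_2\!\left(\begin{matrix}q^{\lambda_1-h_1+l_1+\alpha_1},\ q^{\lambda_1-h_2+l_1+\alpha_1}t_1/t_2,\ q^{l_1+1/2}t_1/x\\ q^{l_1-l_2+1}t_1/t_2,\ q^{\lambda_1+l_1+\alpha_1+1/2}t_1/x\end{matrix};q,q^{k+1}\right),$$ $$g_7(x)=(1-q)x^{-\alpha_1}\frac{(q,\ q^{-l_1+l_2+1}t_2/t_1,\ q^{\lambda_1+l_2+\alpha_1+1/2}t_2/x;q)_\infty}{(q^{\lambda_1-h_2+l_2+\alpha_1},\ q^{\lambda_1-h_1+l_2+\alpha_1}t_2/t_1,\ q^{l_2+1/2}t_2/x;q)_\infty}\sum_{k=0}^{N}(q^{l_2+1/2}t_2)^{k+1}c_k(E_0)\,{}_3\phi_2\!\left(\begin{matrix}q^{\lambda_1-h_2+l_2+\alpha_1},\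 q^{\lambda_1-h_1+l_2+\alpha_1}t_2/t_1,\ q^{l_2+1/2}t_2/x\\ q^{-l_1+l_2+1}t_2/t_1,\ q^{\lambda_1+l_2+\alpha_1+1/2}t_2/x\end{matrix};q,q^{k+1}\right),$$ $$g_8(x)=(1-q)x^{-\alpha_1}\frac{(q,\ q^{-\lambda_1-l_1-\alpha_1+3/2}x/t_1,\ q^{-\lambda_1-l_2-\alpha_1+3/2}x/t_2;q)_\infty}{(q^{-\lambda_1-\alpha_1+1},\ q^{-h_1+1/2}x/t_1,\ q^{-h_2+1/2}x/t_2;q)_\infty}\sum_{k=0}^{N}(q^{-\lambda_1-\alpha_1+1}x)^{k+1}c_k(E_0)\,{}_3\phi_2\!\left(\begin{matrix}q^{-\lambda_1-\alpha_1+1},\ q^{-h_1+1/2}x/t_1,\ q^{-h_2+1/2}x/t_2\\ q^{-\lambda_1-l_1-\alpha_1+3/2}x/t_1,\ q^{-\lambda_1-l_2-\alpha_1+3/2}x/t_2\end{matrix};q,q^{k+1}\right).$$ Then (iv) for all $i,j\in\{6,7,8\}$ the function $g_i(x)-g_j(x)$ satisfies $A^{\langle4\rangle}(x;h_1,h_2,l_1,l_2,\alpha_1,\alpha_2,\beta)g(x)=E_0g(x)$; and (v) each of $g_6,g_7,g_8$ satisfies $$A^{\langle4\rangle}(x;h_1,h_2,l_1,l_2,\alpha_1,\alpha_2,\beta)g(x)=E_0g(x)-(1-q)x^{-\alpha_1}q^{-\lambda_1+h_1+h_2+1}(q^{-\lambda_1-\alpha_1-N}-1)t_1t_2.$$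
   Context: $q\in\mathbb{C}$ with $0<|q|<1$; powers via a fixed branch of $\log q$ (for real $a$, $|q^a|=|q|^a$); $x^a$ fixed branch with $(qx)^a=q^ax^a$. $(a;q)_\infty=\prod_{k\ge0}(1-aq^k)$, $(a;q)_n=(a;q)_\infty/(aq^n;q)_\infty$, $(a_1,\dots,a_m;q)_n=\prod_i(a_i;q)_n$. ${}_3\phi_2\!\left(\begin{matrix}a_1,a_2,a_3\\ b_1,b_2\end{matrix};q,z\right)=\sum_{n\ge0}\frac{(a_1,a_2,a_3;q)_n}{(q,b_1,b_2;q)_n}z^n$. $t_1,t_2$ fixed non-zero; $T_x^{\pm1}g(x)=g(q^{\pm1}x)$; $A^{\langle 4\rangle}(x;h_1,h_2,l_1,l_2,\alpha_1,\alpha_2,\beta)=x^{-1}(x-q^{h_1+1/2}t_1)(x-q^{h_2+1/2}t_2)T_x^{-1}+q^{\alpha_1+\alpha_2}x^{-1}(x-q^{l_1-1/2}t_1)(x-q^{l_2-1/2}t_2)T_x-\{(q^{\alpha_1}+q^{\alpha_2})x+q^{(h_1+h_2+l_1+l_2+\alpha_1+\alpha_2)/2}(q^{\beta/2}+q^{-\beta/2})t_1t_2x^{-1}\}$. Polynomials: $x_n=t_1t_2q^{n-N+1+h_1+h_2-\alpha_1-2\lambda_1}(1-q^{-n})(1-q^{N-n+\lambda_1+\alpha_1})$, $y_n=q^{N-n+1/2+\lambda_1+\alpha_1+\alpha_2}(q^{l_1}t_1+q^{l_2}t_2)+q^{n-N-1/2-\lambda_1}(q^{h_1}t_1+q^{h_2}t_2)$,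 $z_n=q^{n-N-2+\alpha_1}(1-q^{N-n+1+\lambda_1+\alpha_2})(1-q^{N-n+2})$; $c_{-1}(E)=0$, $c_0(E)=1$, $c_n(E)x_n=c_{n-1}(E)(E+y_n)-c_{n-2}(E)z_n$ for $n=1,\dots,N$, $c(E)=x_1\cdots x_N[c_N(E)(E+y_{N+1})-c_{N-1}(E)z_{N+1}]$. *)

From Stdlib Require Import Reals List.
Import ListNotations.
From Coquelicot Require Import Coquelicot.
Open Scope C_scope.

Definition cexp (z : C) : C :=
  (exp (Re z) * cos (Im z), exp (Re z) * sin (Im z))%R.

Definition limC (u : nat -> C) : C := @lim C_CompleteNormedModule (filtermap u eventually).

Fixpoint prodC (f : nat -> C) (n : nat) : C :=
  match n with O => 1 | S m => prodC f m * f m end.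
Fixpoint sumC (f : nat -> C) (n : nat) : C :=
  match n with O => 0 | S m => sumC f m + f m end.

Definition qpoch (q a : C) (n : nat) : C := prodC (fun k => 1 - a * Cpow q k) n.
Definition qpoch_inf (q a : C) : C := limC (qpoch q a).

Definition phi32 (q a1 a2 a3 b1 b2 z : C) : C :=
  limC (sumC (fun n => qpoch q a1 n * qpoch q a2 n * qpoch q a3 n
            / (qpoch q q n * qpoch q b1 n * qpoch q b2 n) * Cpow z n)).

Definition qgen (q a : C) : Prop := forall n : nat, 1 - a * Cpow q n <> 0.

(* the polynomials c_n(E): cseq n = (c_{n-1}(E), c_n(E)) *)
Section Cpoly.
Variables (qp : R -> C) (t1 t2 : C) (N : nat) (h1 h2 l1 l2 a1 a2 lam1 : R) (E : C).
Definition xn (n : nat) : C :=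
  t1 * t2 * qp (INR n - INR N + 1 + h1 + h2 - a1 - 2 * lam1)%R
     * (1 - qp (- INR n)%R) * (1 - qp (INR N - INR n + lam1 + a1)%R).
Definition yn (n : nat) : C :=
  qp (INR N - INR n + /2 + lam1 + a1 + a2)%R * (qp l1 * t1 + qp l2 * t2)
  + qp (INR n - INR N - /2 - lam1)%R * (qp h1 * t1 + qp h2 * t2).
Definition zn (n : nat) : C :=
  qp (INR n - INR N - 2 + a1)%R * (1 - qp (INR N - INR n + 1 + lam1 + a2)%R)
     * (1 - qp (INR N - INR n + 2)%R).
Fixpoint cseq (n : nat) : C * C :=
  match n with
  | O => (RtoC 0, RtoC 1)
  | S m => let (a, b) := cseq m in
           (b, (b * (E + yn (S m)) - a * zn (S m)) / xn (S m))
  end.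
Definition cn (n : nat) : C := snd (cseq n).
Definition cE : C :=
  prodC (fun k => xn (S k)) N
   * (snd (cseq N) * (E + yn (S N)) - fst (cseq N) * zn (S N)).
End Cpoly.

(* The q-difference operator A^<4>(x;h1,h2,l1,l2,a1,a2,beta) applied to g at x;
   qp a stands for q^a;  T_x^{-1} g(x) = g(x/q), T_x g(x) = g(q x). *)
Definition A4 (q : C) (qp : R -> C) (t1 t2 : C) (h1 h2 l1 l2 a1 a2 beta : R)
  (g : C -> C) (x : C) : C :=
  / x * (x - qp (h1 + /2)%R * t1) * (x - qp (h2 + /2)%R * t2) * g (x / q)
  + qp (a1 + a2)%R * / x * (x - qp (l1 - /2)%R * t1) * (x - qp (l2 - /2)%R * t2) * g (q * x)
  - ((qp a1 + qp a2) * x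
     + qp ((h1 + h2 + l1 + l2 + a1 + a2) / 2)%R * (qp (beta / 2)%R + qp (- beta / 2)%R)
       * t1 * t2 * / x) * g x.

Definition gshape (q : C) (ypow : C) (c : nat -> C) (N : nat) (w A1 A2 A3 B1 B2 : C) : C :=
  (1 - q) * ypow
  * (qpoch_inf q q * qpoch_inf q B1 * qpoch_inf q B2)
  / (qpoch_inf q A1 * qpoch_inf q A2 * qpoch_inf q A3)
  * sumC (fun k => Cpow w (S k) * c k * phi32 q A1 A2 A3 B1 B2 (Cpow q (S k))) (S N).

Section Gfuns.
Variables (q : C) (qp : R -> C) (xp : R -> C -> C) (t1 t2 : C) (N : nat)
          (h1 h2 l1 l2 a1 a2 lam1 : R) (E0 : C).
Let c := cn qp t1 t2 N h1 h2 l1 l2 a1 a2 lam1 E0.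

(* the five parameters (A1,A2,A3,B1,B2) of g6, g7, g8 at the point y *)
Definition par6 (y : C) : list C :=
  [qp (lam1 - h1 + l1 + a1)%R; qp (lam1 - h2 + l1 + a1)%R * t1 / t2;
   qp (l1 + /2)%R * t1 / y; qp (l1 - l2 + 1)%R * t1 / t2;
   qp (lam1 + l1 + a1 + /2)%R * t1 / y].
Definition par7 (y : C) : list C :=
  [qp (lam1 - h2 + l2 + a1)%R; qp (lam1 - h1 + l2 + a1)%R * t2 / t1;
   qp (l2 + /2)%R * t2 / y; qp (- l1 + l2 + 1)%R * t2 / t1;
   qp (lam1 + l2 + a1 + /2)%R * t2 / y].
Definition par8 (y : C) : list C :=
  [qp (- lam1 - a1 + 1)%R; qp (- h1 + /2)%R * y / t1; qp (- h2 + /2)%R * y / t2;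
   qp (- lam1 - l1 - a1 + 3/2)%R * y / t1; qp (- lam1 - l2 - a1 + 3/2)%R * y / t2].

Definition g6 (y : C) : C :=
  gshape q (xp (- a1)%R y) c N (qp (l1 + /2)%R * t1)
    (qp (lam1 - h1 + l1 + a1)%R) (qp (lam1 - h2 + l1 + a1)%R * t1 / t2)
    (qp (l1 + /2)%R * t1 / y) (qp (l1 - l2 + 1)%R * t1 / t2)
    (qp (lam1 + l1 + a1 + /2)%R * t1 / y).
Definition g7 (y : C) : C :=
  gshape q (xp (- a1)%R y) c N (qp (l2 + /2)%R * t2)
    (qp (lam1 - h2 + l2 + a1)%R) (qp (lam1 - h1 + l2 + a1)%R * t2 / t1)
    (qp (l2 + /2)%R * t2 / y) (qp (- l1 + l2 + 1)%R * t2 / t1)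
    (qp (lam1 + l2 + a1 + /2)%R * t2 / y).
Definition g8 (y : C) : C :=
  gshape q (xp (- a1)%R y) c N (qp (- lam1 - a1 + 1)%R * y)
    (qp (- lam1 - a1 + 1)%R) (qp (- h1 + /2)%R * y / t1) (qp (- h2 + /2)%R * y / t2)
    (qp (- lam1 - l1 - a1 + 3/2)%R * y / t1) (qp (- lam1 - l2 - a1 + 3/2)%R * y / t2).

Definition gfun (i : nat) : C -> C :=
  match i with 6 => g6 | 7 => g7 | 8 => g8 | _ => fun _ => 0 end.

(* genericity at the point y: y <> 0 and every parameter A_i, B_i of
   g6, g7, g8 is q-generic, so that all denominators are nonzero *)
Definition generic_at (y : C) : Prop :=
  y <> 0 /\ (forall a, List.In a (par6 y ++ par7 y ++ par8 y) -> qgen q a).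
End Gfuns.

From Stdlib Require Import Reals Lra Lia Arith.
From Coquelicot Require Import Coquelicot.
Open Scope C_scope.

(* Each of g6, g7, g8 is (1 - q) x^(-a1) times a Jackson integral sum_n s T(s) X_x(s) P(s)
   over a geometric grid s = w q^n: expanding the 3phi2's and exchanging the sums turns the
   q-Pochhammer quotients into infinite products, split into T(s), depending on s only,
   X_x(s) = (q^(lam1+a1) s/x; q)_oo / (s/x; q)_oo, and P(s) = sum_k c_k(E0) s^k.
   The three-term recurrence of the c_k together with c(E0) = 0 makes P satisfy a
   second-order q-difference equation adjoint to A<4>; with the first-order equations of
   T and X_x, the integrand of (A<4> - E0) g_i becomes a difference B(n+1) - B(n), so
   (A<4> - E0) g_i is a boundary term.  The term at n = 0 vanishes (for g8, whose grid moves
   with x, it cancels against the shift of the grid); as n -> oo the infinite products tend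
   to 1 and leave the constant of (v). *)

Lemma C1_neq_0 : RtoC 1 <> 0.
Proof. intro H. apply (f_equal fst) in H. simpl in H. lra. Qed.

Lemma Cinv_neq_0 (a : C) : a <> 0 -> / a <> 0.
Proof. intros Ha E. apply C1_neq_0. rewrite <- (Cinv_l a Ha), E. ring. Qed.

Lemma Cdiv_neq_0 (a b : C) : a <> 0 -> b <> 0 -> a / b <> 0.
Proof. intros Ha Hb. apply Cmult_neq_0; [exact Ha | apply Cinv_neq_0, Hb]. Qed.

Lemma Cmod_sub_sym (a b : C) : Cmod (a - b) = Cmod (b - a).
Proof. replace (a - b) with (- (b - a)) by ring. apply Cmod_opp. Qed.

Lemma Cmod_sub_triangle (a b c : C) : (Cmod (a - c) <= Cmod (a - b) + Cmod (b - c))%R.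
Proof. replace (a - c) with ((a - b) + (b - c)) by ring. apply Cmod_triangle. Qed.

Lemma geom_eventually_lt (r K eps : R) : (0 <= r < 1)%R -> (0 < eps)%R ->
  exists M, forall n, (M <= n)%nat -> (K * r ^ n < eps)%R.
Proof.
  intros Hr He.
  assert (exists M, forall n, (n >= M)%nat -> (Rabs (r ^ n) < eps / (Rabs K + 1))%R)
    as [M HM].
  { apply pow_lt_1_zero; [rewrite Rabs_pos_eq; lra |].
    apply Rdiv_lt_0_compat; [lra | pose proof (Rabs_pos K); lra]. }
  exists M. intros n Hn. specialize (HM n Hn).
  rewrite Rabs_pos_eq in HM by (apply pow_le; lra).
  assert (Hpos : (0 <= r ^ n)%R) by (apply pow_le; lra).
  assert (HK : (K <= Rabs K)%R) by apply Rle_abs.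
  apply (Rmult_lt_compat_l (Rabs K + 1)) in HM; [| pose proof (Rabs_pos K); lra].
  replace ((Rabs K + 1) * (eps / (Rabs K + 1)))%R with eps in HM
    by (field; pose proof (Rabs_pos K); lra).
  nra.
Qed.

Definition cv (u : nat -> C) (l : C) : Prop :=
  forall eps : R, (0 < eps)%R ->
    exists M : nat, forall n, (M <= n)%nat -> (Cmod (u n - l) < eps)%R.

Definition cauchy_seq (u : nat -> C) : Prop :=
  forall eps : R, (0 < eps)%R -> exists M : nat,
    forall n m, (M <= n)%nat -> (M <= m)%nat -> (Cmod (u n - u m) < eps)%R.

Lemma cv_unique u l1 l2 : cv u l1 -> cv u l2 -> l1 = l2.
Proof.
  intros H1 H2. apply Ceq_minus, Cmod_eq_0.
  destruct (Req_dec (Cmod (l1 - l2)) 0) as [e | ne]; [exact e |]. exfalso.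
  set (d := Cmod (l1 - l2)).
  assert (dp : (0 < d)%R) by (pose proof (Cmod_ge_0 (l1 - l2)); unfold d in *; lra).
  destruct (H1 (d / 2)%R) as [M1 HM1]; [lra |].
  destruct (H2 (d / 2)%R) as [M2 HM2]; [lra |].
  specialize (HM1 (M1 + M2)%nat ltac:(lia)). specialize (HM2 (M1 + M2)%nat ltac:(lia)).
  pose proof (Cmod_sub_triangle l1 (u (M1 + M2)%nat) l2) as T.
  rewrite (Cmod_sub_sym l1 (u _)) in T. unfold d in *. lra.
Qed.

Lemma cauchy_cv (u : nat -> C) : cauchy_seq u -> cv u (limC u).
Proof.
  intros H. unfold limC.
  set (F := filtermap u eventually).
  assert (PF : ProperFilter F) by apply filtermap_proper_filter, eventually_filter.
  assert (CF : cauchy F).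
  { intros eps. destruct (H eps (cond_pos eps)) as [M HM]. exists (u M).
    exists M. intros n Hn. apply C_NormedModule_mixin_compat1.
    change (Cmod (u n - u M) < eps)%R. apply HM; lia. }
  pose proof (@complete_cauchy C_CompleteNormedModule F PF CF) as HC.
  intros eps Heps.
  assert (Hs2 : (0 < sqrt 2)%R) by (apply sqrt_lt_R0; lra).
  destruct (HC (mkposreal (eps / 2 / sqrt 2) ltac:(apply Rdiv_lt_0_compat; lra))) as [M HM].
  exists M. intros n Hn. specialize (HM n Hn).
  apply C_NormedModule_mixin_compat2 in HM. simpl in HM.
  replace (sqrt 2 * (eps / 2 / sqrt 2))%R with (eps / 2)%R in HM by (field; lra).
  unfold minus, plus, opp in HM; simpl in HM. unfold Cminus. lra.
Qed.

Lemma cv_cauchy u l : cv u l -> cauchy_seq u.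
Proof.
  intros H eps He. destruct (H (eps / 2)%R) as [M HM]; [lra |].
  exists M. intros n m Hn Hm. pose proof (Cmod_sub_triangle (u n) l (u m)).
  pose proof (HM n Hn). pose proof (HM m Hm). rewrite (Cmod_sub_sym l) in *. lra.
Qed.

Lemma cv_limC u l : cv u l -> limC u = l.
Proof. intros H. exact (cv_unique u _ _ (cauchy_cv u (cv_cauchy u l H)) H). Qed.

Lemma cauchy_of_tail (u : nat -> C) (K r : R) M0 : (0 <= r < 1)%R ->
  (forall n k, (M0 <= n)%nat -> (Cmod (u (n + k)%nat - u n) <= K * r ^ n)%R) ->
  cauchy_seq u.
Proof.
  intros Hr Htail eps He. destruct (geom_eventually_lt r K eps Hr He) as [M HM].
  exists (M0 + M)%nat. intros n m Hn Hm. destruct (le_lt_dec n m) as [Hnm | Hmn].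
  - replace m with (n + (m - n))%nat by lia. rewrite Cmod_sub_sym.
    eapply Rle_lt_trans; [apply Htail; lia | apply HM; lia].
  - replace n with (m + (n - m))%nat by lia.
    eapply Rle_lt_trans; [apply Htail; lia | apply HM; lia].
Qed.

Lemma cv_ext u v l : (forall n, u n = v n) -> cv u l -> cv v l.
Proof.
  intros E H eps He. destruct (H eps He) as [M HM].
  exists M. intros n Hn. rewrite <- E. auto.
Qed.

Lemma cv_eq u l l' : l = l' -> cv u l -> cv u l'.
Proof. intros <-. auto. Qed.

Lemma cv_const c : cv (fun _ => c) c.
Proof.
  intros eps He. exists 0%nat. intros n _.
  replace (c - c) with (RtoC 0) by ring. rewrite Cmod_0. exact He.
Qed.

Lemma cv_plus u v a b : cv u a -> cv v b -> cv (fun n => u n + v n) (a + b).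
Proof.
  intros Hu Hv eps He.
  destruct (Hu (eps / 2)%R) as [M1 H1]; [lra |]. destruct (Hv (eps / 2)%R) as [M2 H2]; [lra |].
  exists (M1 + M2)%nat. intros n Hn.
  replace (u n + v n - (a + b)) with ((u n - a) + (v n - b)) by ring.
  eapply Rle_lt_trans; [apply Cmod_triangle |].
  specialize (H1 n ltac:(lia)). specialize (H2 n ltac:(lia)). lra.
Qed.

Lemma cv_opp u a : cv u a -> cv (fun n => - u n) (- a).
Proof.
  intros Hu eps He. destruct (Hu eps He) as [M H]. exists M. intros n Hn.
  replace (- u n - - a) with (- (u n - a)) by ring. rewrite Cmod_opp. auto.
Qed.

Lemma cv_minus u v a b : cv u a -> cv v b -> cv (fun n => u n - v n) (a - b).
Proof. intros. apply cv_plus; [| apply cv_opp]; auto. Qed.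

Lemma cv_bounded u a : cv u a -> exists B M, forall n, (M <= n)%nat -> (Cmod (u n) <= B)%R.
Proof.
  intros H. destruct (H 1%R) as [M HM]; [lra |]. exists (Cmod a + 1)%R, M.
  intros n Hn. specialize (HM n Hn). replace (u n) with ((u n - a) + a) by ring.
  eapply Rle_trans; [apply Cmod_triangle | lra].
Qed.

Lemma cv_mult u v a b : cv u a -> cv v b -> cv (fun n => u n * v n) (a * b).
Proof.
  intros Hu Hv. destruct (cv_bounded u a Hu) as [B [M0 HB]].
  intros eps He.
  set (K := (Rabs B + Cmod b + 1)%R).
  assert (HK : (0 < K)%R) by (pose proof (Cmod_ge_0 b); pose proof (Rabs_pos B); unfold K; lra).
  destruct (Hu (eps / K)%R) as [M1 H1]; [apply Rdiv_lt_0_compat; lra |].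
  destruct (Hv (eps / K)%R) as [M2 H2]; [apply Rdiv_lt_0_compat; lra |].
  exists (M0 + M1 + M2)%nat. intros n Hn.
  replace (u n * v n - a * b) with (u n * (v n - b) + (u n - a) * b) by ring.
  eapply Rle_lt_trans; [apply Cmod_triangle |]. rewrite !Cmod_mult.
  specialize (H1 n ltac:(lia)). specialize (H2 n ltac:(lia)). specialize (HB n ltac:(lia)).
  pose proof (Cmod_ge_0 (v n - b)). pose proof (Cmod_ge_0 (u n - a)).
  pose proof (Cmod_ge_0 b). pose proof (Rle_abs B). pose proof (Cmod_ge_0 (u n)).
  assert (Hsplit : (eps = (Rabs B + Cmod b + 1) * (eps / K))%R) by (unfold K; field; lra).
  assert (Hepsk : (0 < eps / K)%R) by (apply Rdiv_lt_0_compat; lra).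
  assert (Cmod (u n) * Cmod (v n - b) <= Rabs B * (eps / K))%R
    by (apply Rmult_le_compat; lra).
  assert (Cmod (u n - a) * Cmod b <= (eps / K) * Cmod b)%R
    by (apply Rmult_le_compat_r; lra).
  lra.
Qed.

Lemma cv_scal c u a : cv u a -> cv (fun n => c * u n) (c * a).
Proof. intros. apply cv_mult; [apply cv_const | auto]. Qed.

Lemma cv_inv (u : nat -> C) (a : C) : a <> 0 -> cv u a -> cv (fun n => / u n) (/ a).
Proof.
  intros Ha Hu.
  assert (Hm : (0 < Cmod a)%R) by (apply Cmod_gt_0; exact Ha).
  destruct (Hu (Cmod a / 2)%R) as [M0 H0]; [lra |].
  intros eps He.
  destruct (Hu (eps * (Cmod a * Cmod a / 2))%R) as [M1 H1]; [apply Rmult_lt_0_compat; nra |].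
  exists (M0 + M1)%nat. intros n Hn.
  specialize (H0 n ltac:(lia)). specialize (H1 n ltac:(lia)).
  assert (Hun : (Cmod a / 2 <= Cmod (u n))%R).
  { pose proof (Cmod_sub_triangle a (u n) 0). rewrite Cmod_sub_sym in H0.
    replace (a - 0) with a in H by ring. replace (u n - 0) with (u n) in H by ring. lra. }
  assert (un0 : u n <> 0) by (intro E; rewrite E, Cmod_0 in Hun; lra).
  replace (/ u n - / a) with ((a - u n) / (u n * a)) by (field; auto).
  rewrite Cmod_div, Cmod_mult, Cmod_sub_sym by (apply Cmult_neq_0; auto).
  apply (Rmult_lt_reg_r (Cmod (u n) * Cmod a)); [nra |].
  unfold Rdiv. rewrite Rmult_assoc, Rinv_l, Rmult_1_r by nra.
  assert (eps * Cmod a * (Cmod a / 2) <= eps * Cmod a * Cmod (u n))%R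
    by (apply Rmult_le_compat_l; nra).
  nra.
Qed.

Lemma cv_div (u v : nat -> C) (a b : C) :
  b <> 0 -> cv u a -> cv v b -> cv (fun n => u n / v n) (a / b).
Proof. intros. apply cv_mult; [| apply cv_inv]; auto. Qed.

Lemma cv_shift u a m : cv u a -> cv (fun n => u (m + n)%nat) a.
Proof.
  intros H eps He. destruct (H eps He) as [M HM]. exists M. intros. apply HM. lia.
Qed.

Lemma cv_unshift u a m : cv (fun n => u (m + n)%nat) a -> cv u a.
Proof.
  intros H eps He. destruct (H eps He) as [M HM]. exists (m + M)%nat. intros n Hn.
  replace n with (m + (n - m))%nat by lia. apply HM. lia.
Qed.

Lemma cv_Cpow (q : C) : (Cmod q < 1)%R -> cv (fun n => Cpow q n) 0.
Proof.
  intros Hq eps He. destruct (geom_eventually_lt (Cmod q) 1 eps) as [M HM]; auto.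
  { split; [apply Cmod_ge_0 | exact Hq]. }
  exists M. intros n Hn. replace (Cpow q n - 0) with (Cpow q n) by ring.
  rewrite Cmod_pow. specialize (HM n Hn). lra.
Qed.

Lemma cv_pow (z : nat -> C) (a : C) k : cv z a -> cv (fun m => Cpow (z m) k) (Cpow a k).
Proof. intros H. induction k; simpl; [apply cv_const | apply cv_mult; auto]. Qed.

Lemma cv_le_bound u a c B : cv u a ->
  (exists M, forall n, (M <= n)%nat -> (Cmod (u n - c) <= B)%R) -> (Cmod (a - c) <= B)%R.
Proof.
  intros H [M HM]. apply Rnot_lt_le. intro Hlt.
  destruct (H (Cmod (a - c) - B)%R) as [M1 HM1]; [lra |].
  specialize (HM (M + M1)%nat ltac:(lia)). specialize (HM1 (M + M1)%nat ltac:(lia)).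
  pose proof (Cmod_sub_triangle a (u (M + M1)%nat) c).
  rewrite (Cmod_sub_sym a (u _)) in H0. lra.
Qed.

Lemma sumC_ext (f g : nat -> C) n : (forall k, (k < n)%nat -> f k = g k) -> sumC f n = sumC g n.
Proof. induction n; simpl; intros H; auto. rewrite IHn, H; auto; intros; apply H; lia. Qed.

Lemma sumC_plus (f g : nat -> C) n : sumC (fun k => f k + g k) n = sumC f n + sumC g n.
Proof. induction n; simpl; [ring | rewrite IHn; ring]. Qed.

Lemma sumC_scal (c : C) (f : nat -> C) n : sumC (fun k => c * f k) n = c * sumC f n.
Proof. induction n; simpl; [ring | rewrite IHn; ring]. Qed.

Lemma sumC_lin3 (c1 c2 c3 : C) (f g h : nat -> C) m :
  sumC (fun n => c1 * f n + c2 * g n - c3 * h n) m = c1 * sumC f m + c2 * sumC g m - c3 * sumC h m.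
Proof. induction m; simpl; [ring | rewrite IHm; ring]. Qed.

Lemma sumC_swap (f : nat -> nat -> C) M K :
  sumC (fun n => sumC (fun k => f n k) K) M = sumC (fun k => sumC (fun n => f n k) M) K.
Proof.
  induction M; simpl.
  - induction K; simpl; auto. rewrite <- IHK. ring.
  - rewrite IHM, <- sumC_plus. reflexivity.
Qed.

Lemma sumC_add (f : nat -> C) n k : sumC f (n + k) = sumC f n + sumC (fun j => f (n + j)%nat) k.
Proof.
  induction k; simpl; [rewrite Nat.add_0_r; ring |].
  rewrite Nat.add_succ_r. simpl. rewrite IHk. ring.
Qed.

Lemma sumC_Sl (f : nat -> C) m : sumC f (S m) = f 0%nat + sumC (fun n => f (S n)) m.
Proof. rewrite <- Nat.add_1_l, sumC_add. simpl. ring. Qed.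

Lemma cv_sumC (f : nat -> nat -> C) (l : nat -> C) K :
  (forall k, (k < K)%nat -> cv (fun n => f n k) (l k)) ->
  cv (fun n => sumC (f n) K) (sumC l K).
Proof.
  induction K; intros H; simpl; [apply cv_const |].
  apply cv_plus; [apply IHK; intros; apply H | apply H]; lia.
Qed.

Lemma cv_poly_at_0 (c : nat -> C) (z : nat -> C) n :
  cv z 0 -> cv (fun m => sumC (fun k => Cpow (z m) k * c k) (S n)) (c 0%nat).
Proof.
  intros H. apply (cv_eq _ (sumC (fun k => Cpow 0 k * c k) (S n))).
  - induction n; [simpl; ring |]. simpl sumC in *. rewrite IHn. simpl. ring.
  - apply cv_sumC. intros k _. apply cv_mult; [apply cv_pow, H | apply cv_const].
Qed.

Lemma Cmod_sumC_geo (f : nat -> C) (c r : R) k : (0 <= c)%R -> (0 <= r < 1)%R ->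
  (forall j, (j < k)%nat -> (Cmod (f j) <= c * r ^ j)%R) -> (Cmod (sumC f k) <= c / (1 - r))%R.
Proof.
  intros Hc Hr Hf.
  assert (Hpart : (Cmod (sumC f k) <= c * (1 - r ^ k) / (1 - r))%R).
  { induction k; simpl.
    - rewrite Cmod_0. right. field. lra.
    - eapply Rle_trans; [apply Cmod_triangle |].
      assert (IH : (Cmod (sumC f k) <= c * (1 - r ^ k) / (1 - r))%R)
        by (apply IHk; intros; apply Hf; lia).
      specialize (Hf k ltac:(lia)).
      replace (c * (1 - r * r ^ k) / (1 - r))%R with (c * (1 - r ^ k) / (1 - r) + c * r ^ k)%R
        by (field; lra).
      lra. }
  eapply Rle_trans; [exact Hpart |].
  apply Rmult_le_compat_r; [apply Rlt_le, Rinv_0_lt_compat; lra |].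
  assert (0 <= r ^ k)%R by (apply pow_le; lra). nra.
Qed.

Lemma series_cv_dominated (a : nat -> C) (K r : R) M0 : (0 <= r < 1)%R -> (0 <= K)%R ->
  (forall n, (M0 <= n)%nat -> (Cmod (a n) <= K * r ^ n)%R) -> cv (sumC a) (limC (sumC a)).
Proof.
  intros Hr HK H. apply cauchy_cv, (cauchy_of_tail _ (K / (1 - r)) r M0 Hr).
  intros n k Hn. rewrite sumC_add.
  replace (sumC a n + sumC (fun j => a (n + j)%nat) k - sumC a n)
    with (sumC (fun j => a (n + j)%nat) k) by ring.
  replace (K / (1 - r) * r ^ n)%R with (K * r ^ n / (1 - r))%R by (field; lra).
  apply Cmod_sumC_geo; [apply Rmult_le_pos; [lra | apply pow_le; lra] | exact Hr |].
  intros j _. rewrite Rmult_assoc, <- pow_add. apply H. lia.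
Qed.

Lemma prodC_neq_0 (f : nat -> C) n : (forall k, (k < n)%nat -> f k <> 0) -> prodC f n <> 0.
Proof.
  induction n; simpl; intros H; [apply C1_neq_0 |].
  apply Cmult_neq_0; [apply IHn; intros; apply H | apply H]; lia.
Qed.

Lemma qpoch_add q a m n : qpoch q a (m + n) = qpoch q a m * qpoch q (a * Cpow q m) n.
Proof.
  unfold qpoch. induction n; simpl; [rewrite Nat.add_0_r; ring |].
  rewrite Nat.add_succ_r. simpl. rewrite IHn, Cpow_add_r. ring.
Qed.

Lemma qpoch_neq_0 q a n : qgen q a -> qpoch q a n <> 0.
Proof. intros H. apply prodC_neq_0. intros; apply H. Qed.

Section QPochhammer.
Variable q : C.
Hypothesis Hq1 : (Cmod q < 1)%R.

Let Hq_range : (0 <= Cmod q < 1)%R.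
Proof. split; [apply Cmod_ge_0 | exact Hq1]. Qed.

(* [tau b] bounds [sum_k |b q^k|]; once it is small, [(b;q)_n] stays close to 1. *)
Definition tau (b : C) : R := (Cmod b / (1 - Cmod q))%R.

Lemma tau_ge_0 b : (0 <= tau b)%R.
Proof. apply Rdiv_le_0_compat; [apply Cmod_ge_0 | lra]. Qed.

Lemma tau_geo b n : tau (b * Cpow q n) = (tau b * Cmod q ^ n)%R.
Proof. unfold tau. rewrite Cmod_mult, Cmod_pow. field. lra. Qed.

Lemma qpoch_near_1 b n : (tau b <= 1/4)%R -> (Cmod (qpoch q b n - 1) <= 2 * tau b)%R.
Proof.
  intros Ht.
  assert (Hgeo : (Cmod (qpoch q b n - 1) <= 2 * Cmod b * (1 - Cmod q ^ n) / (1 - Cmod q))%R).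
  { induction n.
    - unfold qpoch; simpl. replace (1 - 1) with (RtoC 0) by ring. rewrite Cmod_0. right. field. lra.
    - unfold qpoch in *; simpl prodC.
      set (P := prodC (fun k => 1 - b * Cpow q k) n) in *.
      replace (P * (1 - b * Cpow q n) - 1) with ((P - 1) * (1 - b * Cpow q n) + - (b * Cpow q n))
        by ring.
      eapply Rle_trans; [apply Cmod_triangle |].
      rewrite Cmod_mult, Cmod_opp, Cmod_mult, Cmod_pow.
      assert (H1 : (Cmod (1 - b * Cpow q n) <= 1 + Cmod b * Cmod q ^ n)%R).
      { eapply Rle_trans; [apply Cmod_triangle |].
        rewrite Cmod_1, Cmod_opp, Cmod_mult, Cmod_pow. lra. }
      assert (Hb : (0 <= Cmod b * Cmod q ^ n)%R)
        by (apply Rmult_le_pos; [apply Cmod_ge_0 | apply pow_le; lra]).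
      assert (Hs : (2 * Cmod b * (1 - Cmod q ^ n) / (1 - Cmod q) <= 1/2)%R).
      { assert (0 <= Cmod q ^ n)%R by (apply pow_le; lra).
        replace (2 * Cmod b * (1 - Cmod q ^ n) / (1 - Cmod q))%R
          with (2 * tau b * (1 - Cmod q ^ n))%R by (unfold tau; field; lra).
        pose proof (tau_ge_0 b). nra. }
      assert (Cmod (P - 1) * Cmod (1 - b * Cpow q n)
              <= 2 * Cmod b * (1 - Cmod q ^ n) / (1 - Cmod q) * (1 + Cmod b * Cmod q ^ n))%R
        by (apply Rmult_le_compat; [apply Cmod_ge_0 | apply Cmod_ge_0 | exact IHn | exact H1]).
      replace (2 * Cmod b * (1 - Cmod q ^ S n) / (1 - Cmod q))%R
        with (2 * Cmod b * (1 - Cmod q ^ n) / (1 - Cmod q) + 2 * (Cmod b * Cmod q ^ n))%R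
        by (simpl; field; lra).
      assert (2 * Cmod b * (1 - Cmod q ^ n) / (1 - Cmod q) * (Cmod b * Cmod q ^ n)
              <= 1/2 * (Cmod b * Cmod q ^ n))%R by (apply Rmult_le_compat_r; lra).
      lra. }
  eapply Rle_trans; [exact Hgeo |].
  replace (2 * Cmod b * (1 - Cmod q ^ n) / (1 - Cmod q))%R
    with (2 * tau b * (1 - Cmod q ^ n))%R by (unfold tau; field; lra).
  assert (0 <= Cmod q ^ n)%R by (apply pow_le; lra). pose proof (tau_ge_0 b). nra.
Qed.

Lemma tau_small b : exists m, forall n, (m <= n)%nat -> (tau (b * Cpow q n) <= 1/4)%R.
Proof.
  destruct (geom_eventually_lt (Cmod q) (tau b) (1/4) Hq_range) as [m Hm]; [lra |].
  exists m. intros n Hn. rewrite tau_geo. left. apply Hm, Hn.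
Qed.

Lemma qpoch_cauchy_small b : (tau b <= 1/4)%R -> cauchy_seq (qpoch q b).
Proof.
  intros Ht. apply (cauchy_of_tail _ (3 * tau b) (Cmod q) 0 Hq_range). intros n k _.
  rewrite qpoch_add.
  replace (qpoch q b n * qpoch q (b * Cpow q n) k - qpoch q b n)
    with (qpoch q b n * (qpoch q (b * Cpow q n) k - 1)) by ring.
  rewrite Cmod_mult.
  assert (Hbig : (Cmod (qpoch q b n) <= 3/2)%R).
  { replace (qpoch q b n) with ((qpoch q b n - 1) + 1) by ring.
    eapply Rle_trans; [apply Cmod_triangle |]. rewrite Cmod_1.
    pose proof (qpoch_near_1 b n Ht). lra. }
  assert (Htn : (tau (b * Cpow q n) <= tau b)%R).
  { rewrite tau_geo. pose proof (tau_ge_0 b).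
    assert (Cmod q ^ n <= 1)%R by (rewrite <- (pow1 n); apply pow_incr; lra). nra. }
  pose proof (qpoch_near_1 (b * Cpow q n) k ltac:(lra)) as Hsmall. rewrite tau_geo in Hsmall.
  replace (3 * tau b * Cmod q ^ n)%R with (3/2 * (2 * (tau b * Cmod q ^ n)))%R by field.
  apply Rmult_le_compat; auto using Cmod_ge_0.
Qed.

Lemma qpoch_cv b : cv (qpoch q b) (qpoch_inf q b).
Proof.
  destruct (tau_small b) as [m Hm].
  set (b' := b * Cpow q m).
  pose proof (cauchy_cv _ (qpoch_cauchy_small b' (Hm m (le_n m)))) as Htail.
  assert (Hcv : cv (qpoch q b) (qpoch q b m * limC (qpoch q b'))).
  { apply (cv_unshift _ _ m). eapply cv_ext; [| apply cv_scal, Htail].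
    intros n. rewrite qpoch_add. reflexivity. }
  unfold qpoch_inf. rewrite (cv_limC _ _ Hcv). exact Hcv.
Qed.

Lemma qpoch_inf_shift b m : qpoch_inf q b = qpoch q b m * qpoch_inf q (b * Cpow q m).
Proof.
  apply (cv_unique (fun n => qpoch q b (m + n))); [apply cv_shift, qpoch_cv |].
  eapply cv_ext; [| apply cv_scal, qpoch_cv]. intros n. rewrite qpoch_add. reflexivity.
Qed.

Lemma qpoch_inf_S b : qpoch_inf q b = (1 - b) * qpoch_inf q (b * q).
Proof. rewrite (qpoch_inf_shift b 1). unfold qpoch; simpl. f_equal; [ring | f_equal; ring]. Qed.

Lemma qpoch_inf_near_1 b : (tau b <= 1/4)%R -> (Cmod (qpoch_inf q b - 1) <= 2 * tau b)%R.
Proof.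
  intros Ht. apply cv_le_bound with (qpoch q b); [apply qpoch_cv |].
  exists 0%nat. intros. apply qpoch_near_1, Ht.
Qed.

Lemma qpoch_inf_neq_0 b : qgen q b -> qpoch_inf q b <> 0.
Proof.
  intros Hg. destruct (tau_small b) as [m Hm]. rewrite (qpoch_inf_shift b m).
  apply Cmult_neq_0; [apply qpoch_neq_0, Hg |].
  intros E. pose proof (qpoch_inf_near_1 _ (Hm m (le_n m))) as H.
  rewrite E in H. replace (0 - 1) with (- (1)) in H by ring. rewrite Cmod_opp, Cmod_1 in H.
  pose proof (Hm m (le_n m)). lra.
Qed.

Lemma qpoch_inf_geo_cv b : cv (fun n => qpoch_inf q (b * Cpow q n)) 1.
Proof.
  destruct (tau_small b) as [m Hm]. intros eps He.
  destruct (geom_eventually_lt (Cmod q) (2 * tau b) eps Hq_range He) as [M HM].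
  exists (m + M)%nat. intros n Hn.
  pose proof (qpoch_inf_near_1 _ (Hm n ltac:(lia))) as H. rewrite tau_geo in H.
  specialize (HM n ltac:(lia)). lra.
Qed.

Definition qratio (a b s : C) : C := qpoch_inf q (a * s) / qpoch_inf q (b * s).

Lemma qratio_qdiff a b s : qpoch_inf q (b * s) <> 0 ->
  qratio a b (q * s) * (1 - a * s) = qratio a b s * (1 - b * s).
Proof.
  intros H. unfold qratio.
  assert (Ea : qpoch_inf q (a * s) = (1 - a * s) * qpoch_inf q (a * (q * s)))
    by (rewrite qpoch_inf_S; do 2 f_equal; ring).
  assert (Eb : qpoch_inf q (b * s) = (1 - b * s) * qpoch_inf q (b * (q * s)))
    by (rewrite qpoch_inf_S; do 2 f_equal; ring).
  rewrite Ea, Eb in *.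
  assert (qpoch_inf q (b * (q * s)) <> 0) by (intro E; apply H; rewrite E; ring).
  assert (1 - b * s <> 0) by (intro E; apply H; rewrite E; ring).
  field. auto.
Qed.

Lemma qratio_geo_cv a b w : cv (fun m => qratio a b (w * Cpow q m)) 1.
Proof.
  unfold qratio. apply (cv_eq _ (1 / 1)); [field; apply C1_neq_0 |].
  apply cv_div; [apply C1_neq_0 | |].
  - eapply cv_ext; [| apply (qpoch_inf_geo_cv (a * w))]. intros m. simpl. f_equal. ring.
  - eapply cv_ext; [| apply (qpoch_inf_geo_cv (b * w))]. intros m. simpl. f_equal. ring.
Qed.

Lemma qgen_q : qgen q q.
Proof.
  intros n E. assert (H : q * Cpow q n = 1) by (apply Ceq_minus in E; rewrite <- E; ring).
  apply (f_equal Cmod) in H. rewrite Cmod_mult, Cmod_pow, Cmod_1 in H.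
  assert (Cmod q ^ n <= 1)%R
    by (rewrite <- (pow1 n); apply pow_incr; split; [apply Cmod_ge_0 | lra]).
  pose proof (Cmod_ge_0 q). pose proof (pow_le (Cmod q) n (Cmod_ge_0 q)). nra.
Qed.

Lemma qpoch_inf_geo_neq_0 a n : qgen q a -> qpoch_inf q (a * Cpow q n) <> 0.
Proof.
  intros H. apply qpoch_inf_neq_0; auto.
  intros k. rewrite <- Cmult_assoc, <- Cpow_add_r. apply H.
Qed.

End QPochhammer.

Section Phi32Series.
Variable q : C.
Hypothesis Hq1 : (Cmod q < 1)%R.

Variables A1 A2 A3 B1 B2 : C.
Hypotheses (gA1 : qgen q A1) (gA2 : qgen q A2) (gA3 : qgen q A3)
  (gB1 : qgen q B1) (gB2 : qgen q B2).

Definition prefactor : C :=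
  qpoch_inf q q * qpoch_inf q B1 * qpoch_inf q B2
  / (qpoch_inf q A1 * qpoch_inf q A2 * qpoch_inf q A3).

Definition weight (n : nat) : C :=
  qpoch_inf q (q * Cpow q n) * qpoch_inf q (B1 * Cpow q n) * qpoch_inf q (B2 * Cpow q n)
  / (qpoch_inf q (A1 * Cpow q n) * qpoch_inf q (A2 * Cpow q n) * qpoch_inf q (A3 * Cpow q n)).

Lemma prefactor_neq_0 : prefactor <> 0.
Proof.
  pose proof (qpoch_inf_neq_0 q Hq1 q (qgen_q q Hq1)).
  pose proof (qpoch_inf_neq_0 q Hq1 B1 gB1). pose proof (qpoch_inf_neq_0 q Hq1 B2 gB2).
  pose proof (qpoch_inf_neq_0 q Hq1 A1 gA1). pose proof (qpoch_inf_neq_0 q Hq1 A2 gA2).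
  pose proof (qpoch_inf_neq_0 q Hq1 A3 gA3).
  apply Cdiv_neq_0; repeat apply Cmult_neq_0; auto.
Qed.

Lemma prefactor_coef (z : C) n :
  prefactor * (qpoch q A1 n * qpoch q A2 n * qpoch q A3 n
               / (qpoch q q n * qpoch q B1 n * qpoch q B2 n) * Cpow z n)
  = weight n * Cpow z n.
Proof.
  unfold prefactor, weight.
  rewrite (qpoch_inf_shift q Hq1 q n), (qpoch_inf_shift q Hq1 B1 n),
    (qpoch_inf_shift q Hq1 B2 n), (qpoch_inf_shift q Hq1 A1 n),
    (qpoch_inf_shift q Hq1 A2 n), (qpoch_inf_shift q Hq1 A3 n).
  pose proof (qpoch_neq_0 q q n (qgen_q q Hq1)). pose proof (qpoch_neq_0 q A1 n gA1).
  pose proof (qpoch_neq_0 q A2 n gA2). pose proof (qpoch_neq_0 q A3 n gA3).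
  pose proof (qpoch_neq_0 q B1 n gB1). pose proof (qpoch_neq_0 q B2 n gB2).
  pose proof (qpoch_inf_geo_neq_0 q Hq1 A1 n gA1). pose proof (qpoch_inf_geo_neq_0 q Hq1 A2 n gA2).
  pose proof (qpoch_inf_geo_neq_0 q Hq1 A3 n gA3).
  field. repeat split; auto.
Qed.

Lemma weight_cv : cv weight 1.
Proof.
  unfold weight. apply (cv_eq _ (1 * 1 * 1 / (1 * 1 * 1))); [field; apply C1_neq_0 |].
  apply cv_div; [rewrite !Cmult_1_l; apply C1_neq_0 | |];
    repeat apply cv_mult; apply qpoch_inf_geo_cv; auto.
Qed.

Lemma weight_series_cv (z : C) : (Cmod z < 1)%R ->
  cv (sumC (fun n => weight n * Cpow z n)) (limC (sumC (fun n => weight n * Cpow z n))).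
Proof.
  intros Hz. destruct (weight_cv 1%R ltac:(lra)) as [M HM].
  apply (series_cv_dominated _ 2 (Cmod z) M); [split; [apply Cmod_ge_0 | lra] | lra |].
  intros n Hn. rewrite Cmod_mult, Cmod_pow. specialize (HM n Hn).
  assert (Cmod (weight n) <= 2)%R.
  { replace (weight n) with ((weight n - 1) + 1) by ring.
    eapply Rle_trans; [apply Cmod_triangle |]. rewrite Cmod_1. lra. }
  apply Rmult_le_compat_r; [apply pow_le, Cmod_ge_0 | auto].
Qed.

Lemma phi32_weight_series (z : C) : (Cmod z < 1)%R ->
  prefactor * phi32 q A1 A2 A3 B1 B2 z = limC (sumC (fun n => weight n * Cpow z n)).
Proof.
  intros Hz. unfold phi32.
  set (L := limC (sumC (fun n => weight n * Cpow z n))).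
  pose proof (weight_series_cv z Hz) as Hcv. fold L in Hcv.
  rewrite (cv_limC _ (/ prefactor * L)); [field; apply prefactor_neq_0 |].
  eapply cv_ext; [| apply (cv_scal (/ prefactor) _ _ Hcv)].
  intros M. simpl. rewrite <- sumC_scal. apply sumC_ext. intros k _.
  rewrite <- prefactor_coef. field.
  pose proof prefactor_neq_0. pose proof (qpoch_neq_0 q q k (qgen_q q Hq1)).
  pose proof (qpoch_neq_0 q B1 k gB1). pose proof (qpoch_neq_0 q B2 k gB2).
  repeat split; auto.
Qed.

Definition cpoly (c : nat -> C) (N : nat) (s : C) : C := sumC (fun k => Cpow s (S k) * c k) (S N).

(* Partial sums of the Jackson integral [int_0^w weight * cpoly d_q s] (up to [1 - q]). *)
Definition jackson_partial (c : nat -> C) (N : nat) (w : C) (M : nat) : C :=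
  sumC (fun n => weight n * cpoly c N (w * Cpow q n)) M.

Lemma gshape_jackson (ypow : C) (c : nat -> C) (N : nat) (w : C) :
  cv (jackson_partial c N w) (limC (jackson_partial c N w)) /\
  gshape q ypow c N w A1 A2 A3 B1 B2 = (1 - q) * ypow * limC (jackson_partial c N w).
Proof.
  assert (Hz : forall k, (Cmod (Cpow q (S k)) < 1)%R).
  { intros k. rewrite Cmod_pow. simpl.
    assert (Cmod q ^ k <= 1)%R
      by (rewrite <- (pow1 k); apply pow_incr; split; [apply Cmod_ge_0 | lra]).
    pose proof (Cmod_ge_0 q). nra. }
  set (V k := limC (sumC (fun n => weight n * Cpow (Cpow q (S k)) n))).
  assert (HW : cv (jackson_partial c N w) (sumC (fun k => Cpow w (S k) * c k * V k) (S N))).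
  { eapply cv_ext; [| apply cv_sumC with (f := fun M k => Cpow w (S k) * c k
                      * sumC (fun n => weight n * Cpow (Cpow q (S k)) n) M)].
    - intros M. cbv beta. unfold jackson_partial, cpoly.
      transitivity (sumC (fun k => sumC (fun n => Cpow w (S k) * c k
                       * (weight n * Cpow (Cpow q (S k)) n)) M) (S N)).
      + apply sumC_ext. intros k _. rewrite sumC_scal. reflexivity.
      + rewrite <- sumC_swap. apply sumC_ext. intros n _. rewrite <- sumC_scal.
        apply sumC_ext. intros k _. rewrite Cpow_mult_l, <- !Cpow_mult_r, Nat.mul_comm. ring.
    - intros k _. apply cv_scal, weight_series_cv, Hz. }
  rewrite (cv_limC _ _ HW). split; [exact HW |].
  unfold gshape.
  replace ((1 - q) * ypow * (qpoch_inf q q * qpoch_inf q B1 * qpoch_inf q B2)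
           / (qpoch_inf q A1 * qpoch_inf q A2 * qpoch_inf q A3))
    with ((1 - q) * ypow * prefactor) by (unfold prefactor, Cdiv; ring).
  rewrite <- Cmult_assoc. f_equal. rewrite <- sumC_scal. apply sumC_ext. intros k _.
  unfold V. rewrite <- phi32_weight_series by apply Hz. ring.
Qed.

End Phi32Series.

Section Telescoping.
Variables (Q x r A B a b ap bp E0 : C).
Hypotheses (HQ : Q <> 0) (Hx : x <> 0) (Hr : r <> 0) (Ha : a <> 0) (Hb : b <> 0)
  (Hap : ap <> 0) (Hbp : bp <> 0).

Definition Ufac (s : C) : C := (1 - s / ap) * (1 - s / bp).
Definition Vfac (s : C) : C := (1 - r * s / a) * (1 - r * s / b).
Definition kA : C := A * a * b / r.
Definition kB : C := B * Q * ap * bp.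
Definition cA : C := A * (x - a) * (x - b) / x.
Definition cB : C := B * (x - ap) * (x - bp) / x.
Definition dcoef : C := (A + B) * x + (kA + B * r * ap * bp) / x.
Definition ecoef : C := A + B * r / Q.

(* Pointwise form of the q-difference equation: with [X], [Xp], [Xm] the values of the
   [x]-dependent factor at [x], [x / Q], [Q x] and [p] a solution of the dual equation,
   the integrand of [A4 - E0] is a discrete derivative. *)
Lemma integrand_identity (s X Xp Xm p0 pQ pq : C) :
  Xp * (1 - r * s / x) = X * (1 - s / x) ->
  Xm * (1 - s / (Q * x)) = (1 - r * s / (Q * x)) * X ->
  kB * Vfac s * pQ + kA * Ufac (s / Q) * pq - (kA + kB + ecoef * s * s) * p0 = E0 * s * p0 ->
  cA * s * Xp * p0 + cB * s * Xm * p0 - (dcoef + E0) * s * X * p0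
  = Vfac s * (kA * p0 * Xp - kB * pQ * X) - Ufac (s / Q) * (kA * pq * X - kB * p0 * Xm).
Proof.
  intros H1 H2 H3. apply Ceq_minus.
  set (W1 := A * (s * x - a * b / r)). set (W2 := B * (s * x - Q * ap * bp)).
  transitivity (p0 * W1 * (Xp * (1 - r * s / x) - X * (1 - s / x))
     + p0 * W2 * (Xm * (1 - s / (Q * x)) - (1 - r * s / (Q * x)) * X)
     + X * (kB * Vfac s * pQ + kA * Ufac (s / Q) * pq - (kA + kB + ecoef * s * s) * p0
            - E0 * s * p0)).
  - unfold W1, W2, Ufac, Vfac, dcoef, kA, kB, cA, cB, ecoef. field. repeat split; auto.
  - rewrite H1, H2, H3. ring.
Qed.

Lemma cA_sub_kA_Vfac (s : C) : cA * s - kA * Vfac s = (1 - r * s / x) * (A * (s * x - a * b / r)).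
Proof. unfold cA, kA, Vfac. field. repeat split; auto. Qed.

Variables (p : C -> C) (s T X Xp Xm : nat -> C).
Hypotheses (hs : forall n, s (S n) = Q * s n)
  (hT : forall n, Ufac (s n) * T (S n) = Vfac (s n) * T n)
  (hXp : forall n, Xp n = X (S n))
  (hXm : forall n, Xm (S n) = X n)
  (HX1 : forall n, Xp n * (1 - r * s n / x) = X n * (1 - s n / x))
  (HX2 : forall n, Xm n * (1 - s n / (Q * x)) = (1 - r * s n / (Q * x)) * X n)
  (Hp : forall n, kB * Vfac (s n) * p (Q * s n) + kA * Ufac (s n / Q) * p (s n / Q)
                  - (kA + kB + ecoef * s n * s n) * p (s n) = E0 * s n * p (s n)).

Definition integrand (n : nat) : C :=
  cA * (s n * T n * Xp n * p (s n)) + cB * (s n * T n * Xm n * p (s n))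
  - (dcoef + E0) * (s n * T n * X n * p (s n)).

Definition boundary (n : nat) : C :=
  Ufac (s n / Q) * T n * (kA * p (s n / Q) * X n - kB * p (s n) * Xm n).

Lemma integrand_telescopes n : integrand n = boundary (S n) - boundary n.
Proof.
  unfold integrand, boundary.
  rewrite hs. replace (Q * s n / Q) with (s n) by (field; auto).
  rewrite hXm, <- hXp.
  replace (Ufac (s n) * T (S n) * (kA * p (s n) * Xp n - kB * p (Q * s n) * X n))
    with (Vfac (s n) * T n * (kA * p (s n) * Xp n - kB * p (Q * s n) * X n))
    by (rewrite <- hT; ring).
  pose proof (integrand_identity (s n) (X n) (Xp n) (Xm n) (p (s n)) (p (Q * s n)) (p (s n / Q))
                (HX1 n) (HX2 n) (Hp n)) as K.
  transitivity (T n * (cA * s n * Xp n * p (s n) + cB * s n * Xm n * p (s n)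
                       - (dcoef + E0) * s n * X n * p (s n))); [ring |].
  rewrite K. ring.
Qed.

Lemma sumC_integrand m : sumC integrand m = boundary m - boundary 0.
Proof. induction m; simpl; [ring | rewrite IHm, integrand_telescopes; ring]. Qed.

End Telescoping.

Fixpoint crec (xf yf zf : nat -> C) (E : C) (n : nat) : C * C :=
  match n with
  | O => (RtoC 0, RtoC 1)
  | S m => let (a, b) := crec xf yf zf E m in
           (b, (b * (E + yf (S m)) - a * zf (S m)) / xf (S m))
  end.

Lemma cseq_crec qp t1 t2 N h1 h2 l1 l2 a1 a2 lam1 E n :
  cseq qp t1 t2 N h1 h2 l1 l2 a1 a2 lam1 E n =
  crec (xn qp t1 t2 N h1 h2 a1 lam1) (yn qp t1 t2 N h1 h2 l1 l2 a1 a2 lam1)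
       (zn qp N a1 a2 lam1) E n.
Proof. induction n; simpl; [reflexivity | rewrite IHn; reflexivity]. Qed.

Lemma crec_fst (xf yf zf : nat -> C) E m : fst (crec xf yf zf E (S m)) = snd (crec xf yf zf E m).
Proof. simpl. destruct (crec xf yf zf E m). reflexivity. Qed.

Lemma crec_snd (xf yf zf : nat -> C) E m : xf (S m) <> 0 ->
  snd (crec xf yf zf E (S m)) * xf (S m) =
  snd (crec xf yf zf E m) * (E + yf (S m)) - fst (crec xf yf zf E m) * zf (S m).
Proof. intros H. simpl. destruct (crec xf yf zf E m). simpl. field. auto. Qed.

Section PolynomialSolution.
Variables (Q r A B a b ap bp E : C).
Hypotheses (HQ : Q <> 0) (Hr : r <> 0) (Ha : a <> 0) (Hb : b <> 0) (Hap : ap <> 0) (Hbp : bp <> 0).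
Variables (xf yf zf : nat -> C) (N : nat).
Let kA' := kA r A a b.
Let kB' := kB Q B ap bp.
Let e := ecoef Q r A B.
Hypothesis Hx : forall k, xf k = kA' * (/ Cpow Q k - 1) + kB' * (Cpow Q k - 1).
Hypothesis Hy : forall k,
  yf (S k) = kB' * r * (/ a + / b) * Cpow Q k + kA' * (/ ap + / bp) / Cpow Q (S k).
Hypothesis Hz : forall k,
  zf (S (S k)) = kB' * r * r * Cpow Q k / (a * b) + kA' / (Cpow Q (S (S k)) * ap * bp) - e.
Hypothesis Hnz : forall j, (1 <= j <= N)%nat -> xf j <> 0.
Hypothesis HcE :
  snd (crec xf yf zf E N) * (E + yf (S N)) - fst (crec xf yf zf E N) * zf (S N) = 0.
Hypothesis Hz0 : zf (S (S N)) = 0.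

Let c k := snd (crec xf yf zf E k).
Definition rec_poly (s : C) : C := sumC (fun k => Cpow s k * c k) (S N).

Lemma rec_poly_monomial (s : C) k :
  kB' * Vfac r a b s * Cpow (Q * s) k + kA' * Ufac ap bp (s / Q) * Cpow (s / Q) k
  - (kA' + kB' + e * s * s + E * s) * Cpow s k
  = Cpow s k * (xf k - (E + yf (S k)) * s + zf (S (S k)) * s * s).
Proof.
  rewrite Hx, Hy, Hz, Cpow_mult_l.
  unfold Cdiv at 2 3. rewrite Cpow_mult_l, Cpow_inv by exact HQ.
  pose proof (Cpow_nz Q k HQ). simpl.
  unfold kB', kA', e, kA, kB, ecoef, Ufac, Vfac. field. repeat split; auto.
Qed.

Lemma rec_poly_partial M : (M <= N)%nat -> forall s,
  sumC (fun k => c k * (Cpow s k * (xf k - (E + yf (S k)) * s + zf (S (S k)) * s * s))) (S M)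
  = Cpow s (S M) * (fst (crec xf yf zf E M) * zf (S M) - c M * (E + yf (S M)))
    + Cpow s (S (S M)) * c M * zf (S (S M)).
Proof.
  induction M; intros HM s.
  - simpl. unfold c; simpl. rewrite Hx. simpl. field.
  - rewrite <- Nat.add_1_r, sumC_add, Nat.add_1_r, IHM by lia. simpl sumC.
    rewrite crec_fst. fold (c M).
    pose proof (crec_snd xf yf zf E M (Hnz (S M) ltac:(lia))) as Hrec.
    fold (c (S M)) (c M) in Hrec. rewrite Nat.add_0_r.
    transitivity (Cpow s (S M) * (fst (crec xf yf zf E M) * zf (S M) - c M * (E + yf (S M))
                                  + c (S M) * xf (S M))
      + Cpow s (S (S M)) * (c M * zf (S (S M)) - c (S M) * (E + yf (S (S M))))
      + Cpow s (S (S (S M))) * c (S M) * zf (S (S (S M)))); [simpl; ring |].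
    rewrite Hrec. simpl. ring.
Qed.

(* By the recurrence only the two top coefficients survive ([rec_poly_partial]); they
   vanish by [c(E) = 0] and [zf (N + 2) = 0]. *)
Lemma rec_poly_qdiff (s : C) :
  kB' * Vfac r a b s * rec_poly (Q * s) + kA' * Ufac ap bp (s / Q) * rec_poly (s / Q)
  - (kA' + kB' + e * s * s) * rec_poly s = E * s * rec_poly s.
Proof.
  apply Ceq_minus. unfold rec_poly.
  transitivity (kB' * Vfac r a b s * sumC (fun k => Cpow (Q * s) k * c k) (S N)
    + kA' * Ufac ap bp (s / Q) * sumC (fun k => Cpow (s / Q) k * c k) (S N)
    - (kA' + kB' + e * s * s + E * s) * sumC (fun k => Cpow s k * c k) (S N)); [ring |].
  rewrite <- sumC_lin3.
  transitivity (sumC (fun k => c k * (Cpow s k * (xf k - (E + yf (S k)) * s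
                                                + zf (S (S k)) * s * s))) (S N)).
  - apply sumC_ext. intros k _. rewrite <- rec_poly_monomial. ring.
  - rewrite rec_poly_partial, Hz0 by lia. unfold c.
    transitivity (- Cpow s (S N) * (snd (crec xf yf zf E N) * (E + yf (S N))
                                    - fst (crec xf yf zf E N) * zf (S N))); [ring |].
    rewrite HcE. ring.
Qed.

End PolynomialSolution.

Section Theorem37.
Variables (q : C) (qp : R -> C) (t1 t2 : C) (N : nat) (h1 h2 l1 l2 a1 a2 lam1 : R).
Hypotheses (qp_add : forall u v, qp (u + v)%R = qp u * qp v) (qp_one : qp 1%R = q)
  (qp_neq_0 : forall u, qp u <> 0) (Ht1 : t1 <> 0) (Ht2 : t2 <> 0)
  (Hlam : lam1 = ((h1 + h2 - l1 - l2 - a1 - a2 - (INR N + 1) + 2) / 2)%R).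

Lemma qp_0 : qp 0%R = 1.
Proof.
  pose proof (qp_add 0 0) as H. rewrite Rplus_0_r in H. pose proof (qp_neq_0 0%R).
  transitivity (qp 0%R * qp 0%R / qp 0%R); [field; auto | rewrite <- H; field; auto].
Qed.

Lemma qp_opp u : qp (- u)%R = / qp u.
Proof.
  pose proof (qp_add u (- u)) as H. rewrite Rplus_opp_r, qp_0 in H. pose proof (qp_neq_0 u).
  transitivity (qp u * qp (- u)%R / qp u); [field; auto | rewrite <- H; field; auto].
Qed.

Lemma qp_sub u v : qp (u - v)%R = qp u / qp v.
Proof. unfold Rminus. rewrite qp_add, qp_opp. reflexivity. Qed.

Lemma qp_2 : qp 2%R = q * q.
Proof. replace 2%R with (1 + 1)%R by ring. rewrite qp_add, qp_one. reflexivity. Qed.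

Lemma qp_double u : qp (2 * u)%R = qp u * qp u.
Proof. replace (2 * u)%R with (u + u)%R by ring. apply qp_add. Qed.

Lemma qp_half : q = qp (/2)%R * qp (/2)%R.
Proof. rewrite <- qp_add, <- qp_one. f_equal. field. Qed.

Lemma qp_3_2 : qp (3/2)%R = q * qp (/2)%R.
Proof. rewrite <- qp_one, <- qp_add. f_equal. field. Qed.

Lemma Cpow_qp n : Cpow q n = qp (INR n).
Proof.
  induction n; simpl Cpow; [change (INR 0) with 0%R; rewrite qp_0; reflexivity |].
  rewrite S_INR, qp_add, qp_one, IHn. ring.
Qed.

Lemma q_neq_0 : q <> 0.
Proof. rewrite <- qp_one. apply qp_neq_0. Qed.

Ltac qp_expand :=
  repeat first [ rewrite qp_3_2 | rewrite qp_add | rewrite qp_sub | rewrite qp_opp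
               | rewrite qp_double | rewrite qp_2 | rewrite qp_one ];
  rewrite ?qp_half.
Ltac neq_0 := repeat split; try apply qp_neq_0; try apply q_neq_0; auto.

Lemma a2_eq : a2 = (h1 + h2 - l1 - l2 - a1 - INR N + 1 - 2 * lam1)%R.
Proof. rewrite Hlam. field. Qed.

(* The zeros of the coefficients of [T_x^{-1}] and [T_x] in [A4], and the ratio [rho] of
   the two factors of the [x]-dependent part of the integrand. *)
Definition rho := qp (lam1 + a1)%R.
Definition zh1 := qp (h1 + /2)%R * t1.
Definition zh2 := qp (h2 + /2)%R * t2.
Definition zl1 := qp (l1 - /2)%R * t1.
Definition zl2 := qp (l2 - /2)%R * t2.
Definition kA0 := kA rho (qp a1) zh1 zh2.
Definition kB0 := kB q (qp a2) zl1 zl2.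

Lemma kA0_eq : kA0 = qp (- lam1 + h1 + h2 + 1)%R * t1 * t2.
Proof. unfold kA0, kA, rho, zh1, zh2. qp_expand. field. neq_0. Qed.

Lemma kB0_eq : kB0 = qp (- lam1 + h1 + h2 + 1)%R * qp (- lam1 - a1 - INR N)%R * t1 * t2.
Proof. unfold kB0, kB, zl1, zl2. rewrite a2_eq. qp_expand. field. neq_0. Qed.

Lemma xn_eq k : xn qp t1 t2 N h1 h2 a1 lam1 k = kA0 * (/ Cpow q k - 1) + kB0 * (Cpow q k - 1).
Proof. rewrite kA0_eq, kB0_eq, Cpow_qp. unfold xn. qp_expand. field. neq_0. Qed.

Lemma yn_eq k : yn qp t1 t2 N h1 h2 l1 l2 a1 a2 lam1 (S k) =
  kB0 * rho * (/ zh1 + / zh2) * Cpow q k + kA0 * (/ zl1 + / zl2) / Cpow q (S k).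
Proof.
  rewrite kA0_eq, kB0_eq. simpl Cpow. rewrite Cpow_qp.
  unfold yn, rho, zh1, zh2, zl1, zl2. rewrite S_INR, a2_eq. qp_expand. field. neq_0.
Qed.

Lemma zn_eq k : zn qp N a1 a2 lam1 (S (S k)) =
  kB0 * rho * rho * Cpow q k / (zh1 * zh2) + kA0 / (Cpow q (S (S k)) * zl1 * zl2)
  - ecoef q rho (qp a1) (qp a2).
Proof.
  rewrite kA0_eq, kB0_eq. simpl Cpow. rewrite Cpow_qp.
  unfold zn, rho, zh1, zh2, zl1, zl2, ecoef. rewrite !S_INR, a2_eq. qp_expand. field. neq_0.
Qed.

Lemma zn_top : zn qp N a1 a2 lam1 (S (S N)) = 0.
Proof.
  unfold zn. replace (INR N - INR (S (S N)) + 2)%R with 0%R by (rewrite !S_INR; ring).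
  rewrite qp_0. ring.
Qed.

Lemma A4_coef_x_inv :
  qp ((h1 + h2 + l1 + l2 + a1 + a2) / 2)%R * (qp ((INR N + 1) / 2)%R + qp (- (INR N + 1) / 2)%R)
  * t1 * t2 = kA0 + qp a2 * rho * zl1 * zl2.
Proof.
  rewrite Cmult_plus_distr_l, <- !qp_add.
  replace ((h1 + h2 + l1 + l2 + a1 + a2) / 2 + (INR N + 1) / 2)%R with (- lam1 + h1 + h2 + 1)%R
    by (rewrite Hlam; field).
  replace ((h1 + h2 + l1 + l2 + a1 + a2) / 2 + - (INR N + 1) / 2)%R
    with (a2 + (lam1 + a1) + (l1 - /2) + (l2 - /2))%R by (rewrite Hlam; field).
  rewrite kA0_eq. unfold rho, zl1, zl2. rewrite !qp_add. ring.
Qed.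

Variables (x E0 : C).
Hypotheses (Hx0 : x <> 0) (Hq1 : (Cmod q < 1)%R).
Hypothesis Hxn : forall j, (1 <= j <= N)%nat -> xn qp t1 t2 N h1 h2 a1 lam1 j <> 0.
Hypothesis HcE :
  snd (crec (xn qp t1 t2 N h1 h2 a1 lam1) (yn qp t1 t2 N h1 h2 l1 l2 a1 a2 lam1)
            (zn qp N a1 a2 lam1) E0 N) * (E0 + yn qp t1 t2 N h1 h2 l1 l2 a1 a2 lam1 (S N))
  - fst (crec (xn qp t1 t2 N h1 h2 a1 lam1) (yn qp t1 t2 N h1 h2 l1 l2 a1 a2 lam1)
              (zn qp N a1 a2 lam1) E0 N) * zn qp N a1 a2 lam1 (S N) = 0.

Notation qinf := (qpoch_inf q).

Lemma rho_neq_0 : rho <> 0. Proof. apply qp_neq_0. Qed.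
Lemma zh1_neq_0 : zh1 <> 0. Proof. apply Cmult_neq_0; auto. Qed.
Lemma zh2_neq_0 : zh2 <> 0. Proof. apply Cmult_neq_0; auto. Qed.
Lemma zl1_neq_0 : zl1 <> 0. Proof. apply Cmult_neq_0; auto. Qed.
Lemma zl2_neq_0 : zl2 <> 0. Proof. apply Cmult_neq_0; auto. Qed.
#[local] Hint Resolve rho_neq_0 zh1_neq_0 zh2_neq_0 zl1_neq_0 zl2_neq_0 q_neq_0 qp_neq_0
  Hx0 Ht1 Ht2 : neq_0_db.

Definition grid (w : C) (n : nat) : C := w * Cpow q n.
Definition Tf (s : C) : C := qratio q (/ zl1) (rho / zh1) s * qratio q (/ zl2) (rho / zh2) s.
Definition Xf (y s : C) : C := qratio q (rho / y) (/ y) s.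
Definition Pf (s : C) : C :=
  rec_poly E0 (xn qp t1 t2 N h1 h2 a1 lam1) (yn qp t1 t2 N h1 h2 l1 l2 a1 a2 lam1)
         (zn qp N a1 a2 lam1) N s.

Lemma Pf_qdiff (s : C) :
  kB0 * Vfac rho zh1 zh2 s * Pf (q * s) + kA0 * Ufac zl1 zl2 (s / q) * Pf (s / q)
  - (kA0 + kB0 + ecoef q rho (qp a1) (qp a2) * s * s) * Pf s = E0 * s * Pf s.
Proof.
  apply rec_poly_qdiff; auto with neq_0_db.
  - apply xn_eq.
  - apply yn_eq.
  - apply zn_eq.
  - apply zn_top.
Qed.

Lemma Tf_qdiff (s : C) : qinf (rho / zh1 * s) <> 0 -> qinf (rho / zh2 * s) <> 0 ->
  Ufac zl1 zl2 s * Tf (q * s) = Vfac rho zh1 zh2 s * Tf s.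
Proof.
  intros H1 H2. unfold Tf, Ufac, Vfac.
  pose proof (qratio_qdiff q Hq1 (/ zl1) (rho / zh1) s H1) as E1.
  pose proof (qratio_qdiff q Hq1 (/ zl2) (rho / zh2) s H2) as E2.
  replace (s / zl1) with (/ zl1 * s) by (unfold Cdiv; ring).
  replace (s / zl2) with (/ zl2 * s) by (unfold Cdiv; ring).
  replace (rho * s / zh1) with (rho / zh1 * s) by (unfold Cdiv; ring).
  replace (rho * s / zh2) with (rho / zh2 * s) by (unfold Cdiv; ring).
  transitivity (qratio q (/ zl1) (rho / zh1) (q * s) * (1 - / zl1 * s)
                * (qratio q (/ zl2) (rho / zh2) (q * s) * (1 - / zl2 * s))); [ring |].
  rewrite E1, E2. ring.
Qed.

Lemma Xf_qdiff_up (y s : C) : qinf (/ y * s) <> 0 ->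
  Xf y (q * s) * (1 - rho * s / y) = Xf y s * (1 - s / y).
Proof.
  intros H. unfold Xf. replace (rho * s / y) with (rho / y * s) by (unfold Cdiv; ring).
  replace (s / y) with (/ y * s) by (unfold Cdiv; ring). apply qratio_qdiff; auto.
Qed.

Lemma Xf_qdiff_down (y s : C) : y <> 0 -> qinf (/ y * (s / q)) <> 0 ->
  Xf y (s / q) * (1 - s / (q * y)) = (1 - rho * s / (q * y)) * Xf y s.
Proof.
  intros Hy H. unfold Xf.
  pose proof (qratio_qdiff q Hq1 (rho / y) (/ y) (s / q) H) as E.
  replace (q * (s / q)) with s in E by (field; auto with neq_0_db).
  replace (s / (q * y)) with (/ y * (s / q)) by (field; split; auto with neq_0_db).
  replace (rho * s / (q * y)) with (rho / y * (s / q)) by (field; split; auto with neq_0_db).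
  rewrite <- E. ring.
Qed.

Lemma Xf_div (y s : C) : y <> 0 -> Xf (y / q) s = Xf y (q * s).
Proof.
  intros Hy. unfold Xf, qratio. f_equal; f_equal; field; split; auto with neq_0_db.
Qed.

Lemma Xf_mul (y s : C) : y <> 0 -> Xf (q * y) s = Xf y (s / q).
Proof.
  intros Hy. unfold Xf, qratio. f_equal; f_equal; field; split; auto with neq_0_db.
Qed.

Lemma grid_cv_0 (w : C) : cv (grid w) 0.
Proof. unfold grid. apply (cv_eq _ (w * 0)); [ring | apply cv_scal, cv_Cpow, Hq1]. Qed.

Lemma Pf_grid_cv (w : C) : cv (fun n => Pf (grid w n)) 1.
Proof.
  unfold Pf, rec_poly.
  apply (cv_eq _ (snd (crec (xn qp t1 t2 N h1 h2 a1 lam1) (yn qp t1 t2 N h1 h2 l1 l2 a1 a2 lam1)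
                            (zn qp N a1 a2 lam1) E0 0))); [reflexivity |].
  apply cv_poly_at_0, grid_cv_0.
Qed.

Lemma Tf_grid_cv (w : C) : cv (fun n => Tf (grid w n)) 1.
Proof.
  unfold Tf, grid. apply (cv_eq _ (1 * 1)); [ring |].
  apply cv_mult; apply qratio_geo_cv, Hq1.
Qed.

Lemma Xf_grid_cv (y w : C) : cv (fun n => Xf y (grid w n)) 1.
Proof. unfold Xf, grid. apply qratio_geo_cv, Hq1. Qed.

Lemma grid_div_q (w : C) n : grid w n / q = grid (w / q) n.
Proof. unfold grid. field. auto with neq_0_db. Qed.

Definition jackson_term (w : C) (X : C -> C) (n : nat) : C :=
  grid w n * Tf (grid w n) * X (grid w n) * Pf (grid w n).

Definition jackson_sum (w : C) (X : C -> C) : nat -> C := sumC (jackson_term w X).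

Lemma grid_div_q_S (w : C) n : grid (w / q) (S n) = grid w n.
Proof. unfold grid. simpl. field. auto with neq_0_db. Qed.

Lemma jackson_sum_div_q (w : C) (X : C -> C) m :
  jackson_sum (w / q) X (S m) = jackson_term (w / q) X 0 + jackson_sum w X m.
Proof.
  unfold jackson_sum. rewrite sumC_Sl. f_equal.
  apply sumC_ext. intros n _. unfold jackson_term. rewrite grid_div_q_S. reflexivity.
Qed.

Lemma jackson_sum_mul_q (w : C) (X : C -> C) m :
  jackson_sum (q * w) X m = jackson_sum w X m + jackson_term w X m - jackson_term w X 0.
Proof.
  unfold jackson_sum. transitivity (sumC (jackson_term w X) (S m) - jackson_term w X 0).
  - rewrite sumC_Sl. ring_simplify. apply sumC_ext. intros n _. unfold jackson_term.
    replace (grid (q * w) n) with (grid w (S n)) by (unfold grid; simpl; ring). reflexivity.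
  - simpl. ring.
Qed.

Definition jackson_boundary (w : C) : nat -> C :=
  boundary q rho (qp a1) (qp a2) zh1 zh2 zl1 zl2 Pf (grid w) (fun n => Tf (grid w n))
           (fun n => Xf x (grid w n)) (fun n => Xf x (grid w n / q)).

Lemma Ufac_grid_cv (w : C) : cv (fun n => Ufac zl1 zl2 (grid w n / q)) 1.
Proof.
  assert (H : cv (fun n => grid w n / q) 0).
  { apply (cv_ext (grid (w / q))); [intros n; symmetry; apply grid_div_q | apply grid_cv_0]. }
  unfold Ufac. apply (cv_eq _ ((1 - 0 / zl1) * (1 - 0 / zl2))); [field; auto with neq_0_db |].
  apply cv_mult; apply cv_minus; try apply cv_const;
    (apply cv_div; [auto with neq_0_db | exact H | apply cv_const]).
Qed.

Lemma jackson_boundary_cv (w : C) : cv (jackson_boundary w) (kA0 - kB0).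
Proof.
  unfold jackson_boundary, boundary.
  apply (cv_eq _ (1 * 1 * (kA0 * 1 * 1 - kB0 * 1 * 1))); [ring |].
  apply cv_mult; [apply cv_mult; [apply Ufac_grid_cv | apply Tf_grid_cv] |].
  apply cv_minus; repeat apply cv_mult; try apply cv_const.
  - apply (cv_ext (fun n => Pf (grid (w / q) n))); [| apply Pf_grid_cv].
    intros n. cbv beta. rewrite grid_div_q. reflexivity.
  - apply Xf_grid_cv.
  - apply Pf_grid_cv.
  - apply (cv_ext (fun n => Xf x (grid (w / q) n))); [| apply Xf_grid_cv].
    intros n. cbv beta. rewrite grid_div_q. reflexivity.
Qed.

Notation cA0 := (cA x (qp a1) zh1 zh2).
Notation cB0 := (cB x (qp a2) zl1 zl2).
Notation d0 := (dcoef x rho (qp a1) (qp a2) zh1 zh2 zl1 zl2).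

Lemma grid_telescoping (w : C) :
  (forall n, qinf (rho / zh1 * grid w n) <> 0) ->
  (forall n, qinf (rho / zh2 * grid w n) <> 0) ->
  (forall n, qinf (/ x * grid w n) <> 0) ->
  (forall n, Xf x (grid w n / q) * (1 - grid w n / (q * x))
             = (1 - rho * grid w n / (q * x)) * Xf x (grid w n)) ->
  forall m,
  cA0 * jackson_sum w (fun s => Xf x (q * s)) m + cB0 * jackson_sum w (fun s => Xf x (s / q)) m
  - (d0 + E0) * jackson_sum w (Xf x) m
  = jackson_boundary w m - jackson_boundary w 0.
Proof.
  intros Hh1 Hh2 Hx HX2 m.
  assert (hs : forall n, grid w (S n) = q * grid w n) by (intros; unfold grid; simpl; ring).
  unfold jackson_sum, jackson_boundary. rewrite <- sumC_lin3.
  rewrite <- (sumC_integrand q x rho (qp a1) (qp a2) zh1 zh2 zl1 zl2 E0)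
    with (Xp := fun n => Xf x (q * grid w n)); auto with neq_0_db.
  - intros n. rewrite hs. apply Tf_qdiff; auto.
  - intros n. rewrite hs. reflexivity.
  - intros n. rewrite hs. f_equal. field. auto with neq_0_db.
  - intros n. apply Xf_qdiff_up, Hx.
  - intros n. apply Pf_qdiff.
Qed.

Lemma limit_of_telescoping (w : C) (S1 S2 S0 e : nat -> C) (L1 L2 L0 : C) :
  cv S1 L1 -> cv S2 L2 -> cv S0 L0 -> cv e 0 ->
  (forall m, cA0 * S1 m + cB0 * S2 m - (d0 + E0) * S0 m = jackson_boundary w m + e m) ->
  cA0 * L1 + cB0 * L2 - (d0 + E0) * L0 = kA0 - kB0.
Proof.
  intros H1 H2 H0 He E.
  apply (cv_unique (fun m => cA0 * S1 m + cB0 * S2 m - (d0 + E0) * S0 m)).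
  - apply cv_minus; [apply cv_plus |]; apply cv_scal; auto.
  - apply (cv_ext (fun m => jackson_boundary w m + e m)); [intros; symmetry; apply E |].
    apply (cv_eq _ (kA0 - kB0 + 0)); [ring | apply cv_plus; [apply jackson_boundary_cv | exact He]].
Qed.

(* For [g6] and [g7] the grid does not move with [x]; the boundary term at [n = 0]
   vanishes because [w / q] is a zero of [Ufac]. *)
Lemma fixed_grid_identity (w L1 L2 L0 : C) :
  (forall n, qinf (rho / zh1 * grid w n) <> 0) ->
  (forall n, qinf (rho / zh2 * grid w n) <> 0) ->
  (forall n, qinf (/ x * grid w n) <> 0) ->
  (forall n, qinf (/ x * (grid w n / q)) <> 0) ->
  Ufac zl1 zl2 (w / q) = 0 ->
  cv (jackson_sum w (fun s => Xf x (q * s))) L1 ->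
  cv (jackson_sum w (fun s => Xf x (s / q))) L2 ->
  cv (jackson_sum w (Xf x)) L0 ->
  cA0 * L1 + cB0 * L2 - (d0 + E0) * L0 = kA0 - kB0.
Proof.
  intros Hh1 Hh2 Hx Hxq HU C1 C2 C0.
  apply (limit_of_telescoping w _ _ _ (fun _ => 0) L1 L2 L0 C1 C2 C0 (cv_const 0)).
  intros m. rewrite grid_telescoping; auto.
  - assert (jackson_boundary w 0 = 0) as ->; [| ring].
    unfold jackson_boundary, boundary, grid. simpl Cpow. rewrite Cmult_1_r, HU. ring.
  - intros n. apply Xf_qdiff_down; auto.
Qed.

Lemma Xf_root (y s : C) : y <> 0 -> rho * s = y -> Xf y s = 0.
Proof.
  intros Hy Hs. unfold Xf, qratio.
  replace (rho / y * s) with (rho * s / y) by (unfold Cdiv; ring).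
  rewrite Hs. replace (y / y) with (RtoC 1) by (field; exact Hy).
  rewrite qpoch_inf_S by exact Hq1. unfold Cdiv. ring.
Qed.

Lemma moving_grid_boundary (w : C) :
  rho * w = q * x ->
  qinf (rho / zh1 * (w / q)) <> 0 -> qinf (rho / zh2 * (w / q)) <> 0 ->
  jackson_boundary w 0 = cA0 * jackson_term (w / q) (fun s => Xf x (q * s)) 0.
Proof.
  intros Hw Hh1 Hh2.
  assert (Hroot : Xf x (w / q) = 0).
  { apply Xf_root; auto. replace (rho * (w / q)) with (rho * w / q) by (unfold Cdiv; ring).
    rewrite Hw. field. auto with neq_0_db. }
  assert (Hwq : q * (w / q) = w) by (field; auto with neq_0_db).
  pose proof (cA_sub_kA_Vfac x rho (qp a1) zh1 zh2 Hx0 rho_neq_0 zh1_neq_0 zh2_neq_0 (w / q)) as HV.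
  replace (rho * (w / q) / x) with (RtoC 1) in HV.
  2: { replace (rho * (w / q) / x) with (rho * w / (q * x)) by (field; split; auto with neq_0_db).
       rewrite Hw. field. split; auto with neq_0_db. }
  fold kA0 in HV.
  unfold jackson_boundary, boundary, jackson_term, grid. simpl Cpow. rewrite !Cmult_1_r, Hroot, Hwq.
  fold kA0 kB0. replace (Tf w) with (Tf (q * (w / q))) by (rewrite Hwq; reflexivity).
  transitivity (Ufac zl1 zl2 (w / q) * Tf (q * (w / q)) * kA0 * Pf (w / q) * Xf x w); [ring |].
  rewrite Tf_qdiff by assumption.
  transitivity (kA0 * Vfac rho zh1 zh2 (w / q) * (Tf (w / q) * Pf (w / q) * Xf x w)); [ring |].
  replace (kA0 * Vfac rho zh1 zh2 (w / q)) with (cA0 * (w / q))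
    by (apply Ceq_minus; rewrite HV; ring).
  ring.
Qed.

(* For [g8] the grid [w q^n] moves with [x] ([w] is proportional to [x]): the sums for
   [x / q] and [q x] are the one for [x] shifted by one step, [Xf x] vanishes at [w / q],
   and the extra boundary term is [moving_grid_boundary]. *)
Lemma moving_grid_identity (w L1 L2 L0 : C) :
  rho * w = q * x ->
  (forall n, qinf (rho / zh1 * grid w n) <> 0) ->
  (forall n, qinf (rho / zh2 * grid w n) <> 0) ->
  qinf (rho / zh1 * (w / q)) <> 0 -> qinf (rho / zh2 * (w / q)) <> 0 ->
  (forall n, qinf (/ x * grid w n) <> 0) ->
  cv (jackson_sum (w / q) (fun s => Xf x (q * s))) L1 ->
  cv (jackson_sum (q * w) (fun s => Xf x (s / q))) L2 ->
  cv (jackson_sum w (Xf x)) L0 ->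
  cA0 * L1 + cB0 * L2 - (d0 + E0) * L0 = kA0 - kB0.
Proof.
  intros Hw Hh1 Hh2 Hh1' Hh2' Hx C1 C2 C0.
  set (Xm := fun s => Xf x (s / q)).
  assert (Hroot : Xf x (grid w 0 / q) = 0).
  { apply Xf_root; auto. unfold grid. simpl Cpow.
    replace (rho * (w * 1 / q)) with (rho * w / q) by (unfold Cdiv; ring).
    rewrite Hw. field. auto with neq_0_db. }
  assert (HX2 : forall n, Xf x (grid w n / q) * (1 - grid w n / (q * x))
                          = (1 - rho * grid w n / (q * x)) * Xf x (grid w n)).
  { intros [| n].
    - replace (rho * grid w 0 / (q * x)) with (RtoC 1).
      + rewrite Hroot. ring.
      + unfold grid. simpl Cpow. rewrite Cmult_1_r, Hw. field. split; auto with neq_0_db.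
    - apply Xf_qdiff_down; auto. rewrite grid_div_q, grid_div_q_S. apply Hx. }
  assert (HG0 : jackson_term w Xm 0 = 0) by (unfold jackson_term, Xm; rewrite Hroot; ring).
  apply (limit_of_telescoping w (fun m => jackson_sum (w / q) (fun s => Xf x (q * s)) (S m))
           (jackson_sum (q * w) Xm) (jackson_sum w (Xf x)) (fun m => cB0 * jackson_term w Xm m)
           L1 L2 L0); auto.
  - apply (cv_shift _ _ 1 C1).
  - apply (cv_eq _ (cB0 * (0 * 1 * 1 * 1))); [ring |]. apply cv_scal.
    repeat apply cv_mult; [apply grid_cv_0 | apply Tf_grid_cv | | apply Pf_grid_cv].
    apply (cv_ext (fun n => Xf x (grid (w / q) n))); [| apply Xf_grid_cv].
    intros n. unfold Xm. rewrite grid_div_q. reflexivity.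
  - intros m. rewrite jackson_sum_div_q, jackson_sum_mul_q, HG0.
    transitivity (cA0 * jackson_sum w (fun s => Xf x (q * s)) m + cB0 * jackson_sum w Xm m
                  - (d0 + E0) * jackson_sum w (Xf x) m
                  + cA0 * jackson_term (w / q) (fun s => Xf x (q * s)) 0
                  + cB0 * jackson_term w Xm m); [ring |].
    rewrite grid_telescoping, moving_grid_boundary; auto. ring.
Qed.

Variable xp : R -> C -> C.
Hypothesis Hxp : forall y : C, y <> 0 -> xp (- a1)%R (q * y) = qp (- a1)%R * xp (- a1)%R y.

Notation Aop := (A4 q qp t1 t2 h1 h2 l1 l2 a1 a2 (INR N + 1)).
Notation inhom := ((1 - q) * xp (- a1)%R x * qp (- lam1 + h1 + h2 + 1)%R
                   * (qp (- lam1 - a1 - INR N)%R - 1) * t1 * t2).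

Lemma A4_from_limits (g : C -> C) (L0 L1 L2 : C) :
  g x = (1 - q) * xp (- a1)%R x * L0 ->
  g (x / q) = (1 - q) * xp (- a1)%R (x / q) * L1 ->
  g (q * x) = (1 - q) * xp (- a1)%R (q * x) * L2 ->
  cA0 * L1 + cB0 * L2 - (d0 + E0) * L0 = kA0 - kB0 ->
  Aop g x = E0 * g x - inhom.
Proof.
  intros G0 G1 G2 Key.
  assert (Hxq : x / q <> 0) by (apply Cdiv_neq_0; auto with neq_0_db).
  assert (X1 : xp (- a1)%R (x / q) = qp a1 * xp (- a1)%R x).
  { pose proof (Hxp (x / q) Hxq) as H.
    replace (q * (x / q)) with x in H by (field; auto with neq_0_db).
    rewrite H, Cmult_assoc, <- qp_add. replace (a1 + - a1)%R with 0%R by ring. rewrite qp_0. ring. }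
  unfold A4. rewrite G0, G1, G2, X1, (Hxp x Hx0), A4_coef_x_inv.
  rewrite (qp_add a1 a2), (qp_opp a1).
  transitivity ((1 - q) * xp (- a1)%R x * (cA0 * L1 + cB0 * L2 - d0 * L0)).
  { unfold cA, cB, dcoef, kA0, zh1, zh2, zl1, zl2. field. neq_0. }
  replace (cA0 * L1 + cB0 * L2 - d0 * L0) with (E0 * L0 + (kA0 - kB0)) by (rewrite <- Key; ring).
  rewrite kA0_eq, kB0_eq. ring.
Qed.

Notation cN := (cn qp t1 t2 N h1 h2 l1 l2 a1 a2 lam1 E0).
Notation generic := (generic_at q qp t1 t2 h1 h2 l1 l2 a1 lam1).
Notation params y := (par6 qp t1 t2 h1 h2 l1 l2 a1 lam1 y ++ par7 qp t1 t2 h1 h2 l1 l2 a1 lam1 y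
                      ++ par8 qp t1 t2 h1 h2 l1 l2 a1 lam1 y)%list.

Lemma cpoly_Pf s : cpoly cN N s = s * Pf s.
Proof.
  unfold cpoly, Pf, rec_poly, cn. rewrite <- sumC_scal. apply sumC_ext. intros k _.
  rewrite cseq_crec. simpl Cpow. ring.
Qed.

(* After reindexing, the Jackson integral of [gshape] is [jackson_sum]: the infinite
   products of [weight n] split into the factors [Tf] and [Xf y] at [s = w q^n]. *)
Lemma gshape_jackson_sum (w A1 A2 A3 B1 B2 y : C) :
  qgen q A1 -> qgen q A2 -> qgen q A3 -> qgen q B1 -> qgen q B2 ->
  (forall n, qinf (q * Cpow q n) * qinf (B1 * Cpow q n) * qinf (B2 * Cpow q n)
             = qinf (/ zl1 * grid w n) * qinf (/ zl2 * grid w n) * qinf (rho / y * grid w n)) ->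
  (forall n, qinf (A1 * Cpow q n) * qinf (A2 * Cpow q n) * qinf (A3 * Cpow q n)
             = qinf (rho / zh1 * grid w n) * qinf (rho / zh2 * grid w n) * qinf (/ y * grid w n)) ->
  cv (jackson_sum w (Xf y)) (limC (jackson_sum w (Xf y))) /\
  gshape q (xp (- a1)%R y) cN N w A1 A2 A3 B1 B2
  = (1 - q) * xp (- a1)%R y * limC (jackson_sum w (Xf y)).
Proof.
  intros g1 g2 g3 g4 g5 Hnum Hden.
  destruct (gshape_jackson q Hq1 A1 A2 A3 B1 B2 g1 g2 g3 g4 g5 (xp (- a1)%R y) cN N w)
    as [Hcv Hg].
  assert (E : forall m, jackson_partial q A1 A2 A3 B1 B2 cN N w m = jackson_sum w (Xf y) m).
  { intros m. apply sumC_ext. intros n _. rewrite cpoly_Pf. unfold weight.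
    rewrite Hnum, Hden.
    assert (Hprod : qinf (rho / zh1 * grid w n) * qinf (rho / zh2 * grid w n)
                    * qinf (/ y * grid w n) <> 0).
    { rewrite <- Hden. repeat apply Cmult_neq_0; apply qpoch_inf_geo_neq_0; auto. }
    assert (qinf (rho / zh1 * grid w n) <> 0) by (intro Z; apply Hprod; rewrite Z; ring).
    assert (qinf (rho / zh2 * grid w n) <> 0) by (intro Z; apply Hprod; rewrite Z; ring).
    assert (qinf (/ y * grid w n) <> 0) by (intro Z; apply Hprod; rewrite Z; ring).
    unfold jackson_term, Tf, Xf, qratio, grid in *. field. repeat split; auto. }
  assert (Hcv' : cv (jackson_sum w (Xf y)) (limC (jackson_partial q A1 A2 A3 B1 B2 cN N w)))
    by exact (cv_ext _ _ _ E Hcv).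
  rewrite (cv_limC _ _ Hcv'). split; assumption.
Qed.

Hypotheses (Hg0 : generic x) (Hg1 : generic (q * x)) (Hg2 : generic (x / q)).

Lemma generic_neq_0 y : generic y -> y <> 0.
Proof. intros [H _]. exact H. Qed.

Lemma generic_param y a : generic y -> List.In a (params y) -> qgen q a.
Proof. intros [_ H]. apply H. Qed.

Lemma generic_param_neq_0 y a z n :
  generic y -> List.In a (params y) -> z = a * Cpow q n -> qinf z <> 0.
Proof. intros Hg Ha ->. apply qpoch_inf_geo_neq_0; [exact Hq1 | apply (generic_param y); auto]. Qed.

Lemma jackson_sum_Xf_div w :
  forall m, jackson_sum w (Xf (x / q)) m = jackson_sum w (fun s => Xf x (q * s)) m.
Proof. intros m. apply sumC_ext. intros n _. unfold jackson_term. rewrite Xf_div; auto. Qed.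

Lemma jackson_sum_Xf_mul w :
  forall m, jackson_sum w (Xf (q * x)) m = jackson_sum w (fun s => Xf x (s / q)) m.
Proof. intros m. apply sumC_ext. intros n _. unfold jackson_term. rewrite Xf_mul; auto. Qed.

Lemma A4_fixed_grid (g : C -> C) (w : C) :
  (forall y, generic y -> cv (jackson_sum w (Xf y)) (limC (jackson_sum w (Xf y)))
                          /\ g y = (1 - q) * xp (- a1)%R y * limC (jackson_sum w (Xf y))) ->
  (forall n, qinf (rho / zh1 * grid w n) <> 0) ->
  (forall n, qinf (rho / zh2 * grid w n) <> 0) ->
  (forall n, qinf (/ x * grid w n) <> 0) ->
  (forall n, qinf (/ x * (grid w n / q)) <> 0) ->
  Ufac zl1 zl2 (w / q) = 0 ->
  Aop g x = E0 * g x - inhom.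
Proof.
  intros Hrep Hh1 Hh2 Hx Hxq HU.
  destruct (Hrep x Hg0) as [C0 G0], (Hrep (x / q) Hg2) as [C1 G1], (Hrep (q * x) Hg1) as [C2 G2].
  apply (A4_from_limits g _ _ _ G0 G1 G2), (fixed_grid_identity w); auto.
  - exact (cv_ext _ _ _ (jackson_sum_Xf_div w) C1).
  - exact (cv_ext _ _ _ (jackson_sum_Xf_mul w) C2).
Qed.

Lemma A4_moving_grid (g : C -> C) (c : C) :
  rho * c = q ->
  (forall y, generic y -> cv (jackson_sum (c * y) (Xf y)) (limC (jackson_sum (c * y) (Xf y)))
                          /\ g y = (1 - q) * xp (- a1)%R y * limC (jackson_sum (c * y) (Xf y))) ->
  (forall n, qinf (rho / zh1 * grid (c * x) n) <> 0) ->
  (forall n, qinf (rho / zh2 * grid (c * x) n) <> 0) ->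
  qinf (rho / zh1 * (c * x / q)) <> 0 -> qinf (rho / zh2 * (c * x / q)) <> 0 ->
  (forall n, qinf (/ x * grid (c * x) n) <> 0) ->
  Aop g x = E0 * g x - inhom.
Proof.
  intros Hc Hrep Hh1 Hh2 Hh1' Hh2' Hx.
  destruct (Hrep x Hg0) as [C0 G0], (Hrep (x / q) Hg2) as [C1 G1], (Hrep (q * x) Hg1) as [C2 G2].
  assert (E1 : c * (x / q) = c * x / q) by (field; auto with neq_0_db).
  assert (E2 : c * (q * x) = q * (c * x)) by ring.
  rewrite E1 in C1, G1. rewrite E2 in C2, G2.
  apply (A4_from_limits g _ _ _ G0 G1 G2), (moving_grid_identity (c * x)); auto.
  - rewrite Cmult_assoc, Hc. reflexivity.
  - exact (cv_ext _ _ _ (jackson_sum_Xf_div _) C1).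
  - exact (cv_ext _ _ _ (jackson_sum_Xf_mul _) C2).
Qed.

Ltac in_params := simpl; repeat first [left; reflexivity | right].
Ltac qp_field := unfold grid, zl1, zl2, zh1, zh2, rho; qp_expand; field; neq_0.

Lemma A4_g6 :
  Aop (g6 q qp xp t1 t2 N h1 h2 l1 l2 a1 a2 lam1 E0) x
  = E0 * g6 q qp xp t1 t2 N h1 h2 l1 l2 a1 a2 lam1 E0 x - inhom.
Proof.
  apply (A4_fixed_grid _ (qp (l1 + /2)%R * t1)).
  - intros y Hg. pose proof (generic_neq_0 y Hg). unfold g6.
    apply gshape_jackson_sum; try (apply (generic_param y); [exact Hg | in_params]).
    + intros n.
      replace (/ zl1 * grid (qp (l1 + /2)%R * t1) n) with (q * Cpow q n) by qp_field.
      replace (/ zl2 * grid (qp (l1 + /2)%R * t1) n)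
        with (qp (l1 - l2 + 1)%R * t1 / t2 * Cpow q n) by qp_field.
      replace (rho / y * grid (qp (l1 + /2)%R * t1) n)
        with (qp (lam1 + l1 + a1 + /2)%R * t1 / y * Cpow q n) by qp_field.
      reflexivity.
    + intros n.
      replace (rho / zh1 * grid (qp (l1 + /2)%R * t1) n)
        with (qp (lam1 - h1 + l1 + a1)%R * Cpow q n) by qp_field.
      replace (rho / zh2 * grid (qp (l1 + /2)%R * t1) n)
        with (qp (lam1 - h2 + l1 + a1)%R * t1 / t2 * Cpow q n) by qp_field.
      replace (/ y * grid (qp (l1 + /2)%R * t1) n) with (qp (l1 + /2)%R * t1 / y * Cpow q n)
        by qp_field.
      reflexivity.
  - intros n. apply (generic_param_neq_0 x (qp (lam1 - h1 + l1 + a1)%R) _ n);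
      [exact Hg0 | in_params | qp_field].
  - intros n. apply (generic_param_neq_0 x (qp (lam1 - h2 + l1 + a1)%R * t1 / t2) _ n);
      [exact Hg0 | in_params | qp_field].
  - intros n. apply (generic_param_neq_0 x (qp (l1 + /2)%R * t1 / x) _ n);
      [exact Hg0 | in_params | qp_field].
  - intros n. apply (generic_param_neq_0 (q * x) (qp (l1 + /2)%R * t1 / (q * x)) _ n);
      [exact Hg1 | in_params | qp_field].
  - unfold Ufac. replace (qp (l1 + /2)%R * t1 / q / zl1) with (RtoC 1) by qp_field. ring.
Qed.

Lemma A4_g7 :
  Aop (g7 q qp xp t1 t2 N h1 h2 l1 l2 a1 a2 lam1 E0) x
  = E0 * g7 q qp xp t1 t2 N h1 h2 l1 l2 a1 a2 lam1 E0 x - inhom.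
Proof.
  apply (A4_fixed_grid _ (qp (l2 + /2)%R * t2)).
  - intros y Hg. pose proof (generic_neq_0 y Hg). unfold g7.
    apply gshape_jackson_sum; try (apply (generic_param y); [exact Hg | in_params]).
    + intros n.
      replace (/ zl1 * grid (qp (l2 + /2)%R * t2) n)
        with (qp (- l1 + l2 + 1)%R * t2 / t1 * Cpow q n) by qp_field.
      replace (/ zl2 * grid (qp (l2 + /2)%R * t2) n) with (q * Cpow q n) by qp_field.
      replace (rho / y * grid (qp (l2 + /2)%R * t2) n)
        with (qp (lam1 + l2 + a1 + /2)%R * t2 / y * Cpow q n) by qp_field.
      ring.
    + intros n.
      replace (rho / zh1 * grid (qp (l2 + /2)%R * t2) n)
        with (qp (lam1 - h1 + l2 + a1)%R * t2 / t1 * Cpow q n) by qp_field.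
      replace (rho / zh2 * grid (qp (l2 + /2)%R * t2) n)
        with (qp (lam1 - h2 + l2 + a1)%R * Cpow q n) by qp_field.
      replace (/ y * grid (qp (l2 + /2)%R * t2) n) with (qp (l2 + /2)%R * t2 / y * Cpow q n)
        by qp_field.
      ring.
  - intros n. apply (generic_param_neq_0 x (qp (lam1 - h1 + l2 + a1)%R * t2 / t1) _ n);
      [exact Hg0 | in_params | qp_field].
  - intros n. apply (generic_param_neq_0 x (qp (lam1 - h2 + l2 + a1)%R) _ n);
      [exact Hg0 | in_params | qp_field].
  - intros n. apply (generic_param_neq_0 x (qp (l2 + /2)%R * t2 / x) _ n);
      [exact Hg0 | in_params | qp_field].
  - intros n. apply (generic_param_neq_0 (q * x) (qp (l2 + /2)%R * t2 / (q * x)) _ n);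
      [exact Hg1 | in_params | qp_field].
  - unfold Ufac. replace (qp (l2 + /2)%R * t2 / q / zl2) with (RtoC 1) by qp_field. ring.
Qed.

Lemma A4_g8 :
  Aop (g8 q qp xp t1 t2 N h1 h2 l1 l2 a1 a2 lam1 E0) x
  = E0 * g8 q qp xp t1 t2 N h1 h2 l1 l2 a1 a2 lam1 E0 x - inhom.
Proof.
  apply (A4_moving_grid _ (qp (- lam1 - a1 + 1)%R)).
  - unfold rho. rewrite <- qp_add, <- qp_one. f_equal. ring.
  - intros y Hg. pose proof (generic_neq_0 y Hg). unfold g8.
    apply gshape_jackson_sum; try (apply (generic_param y); [exact Hg | in_params]).
    + intros n.
      replace (/ zl1 * grid (qp (- lam1 - a1 + 1)%R * y) n)
        with (qp (- lam1 - l1 - a1 + 3/2)%R * y / t1 * Cpow q n) by qp_field.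
      replace (/ zl2 * grid (qp (- lam1 - a1 + 1)%R * y) n)
        with (qp (- lam1 - l2 - a1 + 3/2)%R * y / t2 * Cpow q n) by qp_field.
      replace (rho / y * grid (qp (- lam1 - a1 + 1)%R * y) n) with (q * Cpow q n) by qp_field.
      ring.
    + intros n.
      replace (rho / zh1 * grid (qp (- lam1 - a1 + 1)%R * y) n)
        with (qp (- h1 + /2)%R * y / t1 * Cpow q n) by qp_field.
      replace (rho / zh2 * grid (qp (- lam1 - a1 + 1)%R * y) n)
        with (qp (- h2 + /2)%R * y / t2 * Cpow q n) by qp_field.
      replace (/ y * grid (qp (- lam1 - a1 + 1)%R * y) n)
        with (qp (- lam1 - a1 + 1)%R * Cpow q n) by qp_field.
      ring.
  - intros n. apply (generic_param_neq_0 x (qp (- h1 + /2)%R * x / t1) _ n);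
      [exact Hg0 | in_params | qp_field].
  - intros n. apply (generic_param_neq_0 x (qp (- h2 + /2)%R * x / t2) _ n);
      [exact Hg0 | in_params | qp_field].
  - apply (generic_param_neq_0 (x / q) (qp (- h1 + /2)%R * (x / q) / t1) _ 0);
      [exact Hg2 | in_params | simpl Cpow; qp_field].
  - apply (generic_param_neq_0 (x / q) (qp (- h2 + /2)%R * (x / q) / t2) _ 0);
      [exact Hg2 | in_params | simpl Cpow; qp_field].
  - intros n. apply (generic_param_neq_0 x (qp (- lam1 - a1 + 1)%R) _ n);
      [exact Hg0 | in_params | qp_field].
Qed.

Lemma A4_gfun i : (i = 6 \/ i = 7 \/ i = 8)%nat ->
  Aop (gfun q qp xp t1 t2 N h1 h2 l1 l2 a1 a2 lam1 E0 i) x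
  = E0 * gfun q qp xp t1 t2 N h1 h2 l1 l2 a1 a2 lam1 E0 i x - inhom.
Proof. intros [-> | [-> | ->]]; [apply A4_g6 | apply A4_g7 | apply A4_g8]. Qed.

End Theorem37.

Lemma A4_sub (q : C) (qp : R -> C) (t1 t2 : C) (h1 h2 l1 l2 a1 a2 beta : R) (f g : C -> C) (x : C) :
  A4 q qp t1 t2 h1 h2 l1 l2 a1 a2 beta (fun y => f y - g y) x =
  A4 q qp t1 t2 h1 h2 l1 l2 a1 a2 beta f x - A4 q qp t1 t2 h1 h2 l1 l2 a1 a2 beta g x.
Proof. unfold A4. ring. Qed.

Lemma xn_neq_0 (qp : R -> C) (t1 t2 : C) (N : nat) (h1 h2 a1 lam1 : R) :
  (forall u, qp u <> 0) -> (forall e, e <> 0%R -> 1 - qp e <> 0) -> t1 <> 0 -> t2 <> 0 ->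
  (forall n : nat, (n < N)%nat -> (- lam1 - a1)%R <> INR n) ->
  forall j, (1 <= j <= N)%nat -> xn qp t1 t2 N h1 h2 a1 lam1 j <> 0.
Proof.
  intros Hnz Hne1 Ht1 Ht2 Hgen j Hj. unfold xn.
  repeat apply Cmult_neq_0; auto; apply Hne1.
  - assert (1 <= INR j)%R by (apply (le_INR 1); lia). lra.
  - intro E. apply (Hgen (N - j)%nat); [lia |]. rewrite minus_INR by lia. lra.
Qed.

Lemma cE_eq_0_crec (qp : R -> C) (t1 t2 : C) (N : nat) (h1 h2 l1 l2 a1 a2 lam1 : R) (E0 : C) :
  (forall j, (1 <= j <= N)%nat -> xn qp t1 t2 N h1 h2 a1 lam1 j <> 0) ->
  cE qp t1 t2 N h1 h2 l1 l2 a1 a2 lam1 E0 = 0 ->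
  snd (crec (xn qp t1 t2 N h1 h2 a1 lam1) (yn qp t1 t2 N h1 h2 l1 l2 a1 a2 lam1)
            (zn qp N a1 a2 lam1) E0 N) * (E0 + yn qp t1 t2 N h1 h2 l1 l2 a1 a2 lam1 (S N))
  - fst (crec (xn qp t1 t2 N h1 h2 a1 lam1) (yn qp t1 t2 N h1 h2 l1 l2 a1 a2 lam1)
              (zn qp N a1 a2 lam1) E0 N) * zn qp N a1 a2 lam1 (S N) = 0.
Proof.
  intros Hxn HcE. unfold cE in HcE. rewrite cseq_crec in HcE.
  assert (Hprod : prodC (fun k => xn qp t1 t2 N h1 h2 a1 lam1 (S k)) N <> 0)
    by (apply prodC_neq_0; intros k Hk; apply Hxn; lia).
  rewrite <- (Cmult_1_l (_ - _)), <- (Cinv_l _ Hprod), <- Cmult_assoc, HcE. ring.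
Qed.

Lemma cexp_add (u v : C) : cexp (u + v) = cexp u * cexp v.
Proof.
  unfold cexp. destruct u as [u1 u2], v as [v1 v2]. simpl.
  rewrite exp_plus, cos_plus, sin_plus. unfold Cmult; simpl. f_equal; ring.
Qed.

Lemma Cmod_cexp (z : C) : Cmod (cexp z) = exp (Re z).
Proof.
  unfold Cmod, cexp. cbn [fst snd].
  replace ((exp (Re z) * cos (Im z)) ^ 2 + (exp (Re z) * sin (Im z)) ^ 2)%R
    with ((exp (Re z)) ^ 2 * (Rsqr (sin (Im z)) + Rsqr (cos (Im z))))%R by (unfold Rsqr; ring).
  rewrite sin2_cos2, Rmult_1_r, sqrt_pow2; [reflexivity | left; apply exp_pos].
Qed.

Lemma cexp_neq_0 (z : C) : cexp z <> 0.
Proof.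
  intro E. apply (f_equal Cmod) in E. rewrite Cmod_cexp, Cmod_0 in E.
  pose proof (exp_pos (Re z)). lra.
Qed.

Lemma cexp_scal_neq_1 (L : C) (e : R) : (Re L < 0)%R -> e <> 0%R -> 1 - cexp (RtoC e * L) <> 0.
Proof.
  intros HL He E. assert (E' : cexp (RtoC e * L) = 1) by (apply Ceq_minus in E; rewrite <- E; ring).
  apply (f_equal Cmod) in E'. rewrite Cmod_cexp, Cmod_1, <- exp_0 in E'.
  apply exp_inv in E'. destruct L as [L1 L2]. simpl in E', HL. apply He. nra.
Qed.

Theorem theorem3p7 (q Lq : C) (lg : C -> C) (t1 t2 : C) (N : nat)
  (h1 h2 l1 l2 a1 a2 lam1 : R) (E0 x : C) :
  (0 < Cmod q)%R -> (Cmod q < 1)%R ->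
  cexp Lq = q ->
  (forall y : C, y <> 0 -> cexp (lg y) = y) ->
  (forall y : C, y <> 0 -> lg (q * y) = Lq + lg y) ->
  t1 <> 0 -> t2 <> 0 ->
  lam1 = ((h1 + h2 - l1 - l2 - a1 - a2 - (INR N + 1) + 2) / 2)%R ->
  (forall n : nat, (n < N)%nat -> (- lam1 - a1)%R <> INR n) ->
  (lam1 + a2 > 1)%R ->
  let qp := fun a : R => cexp (RtoC a * Lq) in
  let xp := fun (a : R) (y : C) => cexp (RtoC a * lg y) in
  cE qp t1 t2 N h1 h2 l1 l2 a1 a2 lam1 E0 = 0 ->
  generic_at q qp t1 t2 h1 h2 l1 l2 a1 lam1 x ->
  generic_at q qp t1 t2 h1 h2 l1 l2 a1 lam1 (q * x) ->
  generic_at q qp t1 t2 h1 h2 l1 l2 a1 lam1 (x / q) ->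
  let g := gfun q qp xp t1 t2 N h1 h2 l1 l2 a1 a2 lam1 E0 in
  let A := A4 q qp t1 t2 h1 h2 l1 l2 a1 a2 (INR N + 1) in
  (forall i j : nat, (i = 6 \/ i = 7 \/ i = 8)%nat -> (j = 6 \/ j = 7 \/ j = 8)%nat ->
     A (fun y => g i y - g j y) x = E0 * (g i x - g j x))
  /\
  (forall i : nat, (i = 6 \/ i = 7 \/ i = 8)%nat ->
     A (g i) x = E0 * g i x
       - (1 - q) * xp (- a1)%R x * qp (- lam1 + h1 + h2 + 1)%R
         * (qp (- lam1 - a1 - INR N)%R - 1) * t1 * t2).
Proof.
  intros _ Hq1 HLq _ Hlgq Ht1 Ht2 Hlam Hgen _ qp xp HcE Hg0 Hg1 Hg2 g A.
  assert (qp_add : forall u v, qp (u + v)%R = qp u * qp v).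
  { intros u v. unfold qp. rewrite RtoC_plus, Cmult_plus_distr_r. apply cexp_add. }
  assert (qp_one : qp 1%R = q) by (unfold qp; rewrite Cmult_1_l; exact HLq).
  assert (qp_neq_0 : forall u, qp u <> 0) by (intros; apply cexp_neq_0).
  assert (HLq_neg : (Re Lq < 0)%R).
  { rewrite <- HLq, Cmod_cexp, <- exp_0 in Hq1. apply exp_lt_inv, Hq1. }
  assert (Hxn := xn_neq_0 qp t1 t2 N h1 h2 a1 lam1 qp_neq_0
                   (fun e He => cexp_scal_neq_1 Lq e HLq_neg He) Ht1 Ht2 Hgen).
  assert (Hxp : forall y : C, y <> 0 -> xp (- a1)%R (q * y) = qp (- a1)%R * xp (- a1)%R y).
  { intros y Hy. unfold xp, qp. rewrite Hlgq, Cmult_plus_distr_l by exact Hy. apply cexp_add. }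
  assert (Hx0 : x <> 0) by (destruct Hg0; assumption).
  pose proof (A4_gfun q qp t1 t2 N h1 h2 l1 l2 a1 a2 lam1 qp_add qp_one qp_neq_0 Ht1 Ht2 Hlam
                x E0 Hx0 Hq1 Hxn (cE_eq_0_crec _ _ _ _ _ _ _ _ _ _ _ _ Hxn HcE) xp Hxp Hg0 Hg1 Hg2)
    as HA.
  split; [| exact HA].
  intros i j Hi Hj. unfold A, g. rewrite A4_sub, (HA i Hi), (HA j Hj). ring.
Qed.
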